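(* Let $(A,E,\langle\!\langle-,-\rangle\!\rangle,\partial,[\![-,-]\!])$ be a double Courant--Dorfman algebra and $N\ge1$. For $a\in A$, $e,f\in E$ and $1\le i,j,u,v\le N$ define (summing over Sweedler components) $$\partial_N a_{ij}:=(\partial a)_{ij},\qquad \langle e_{ij},f_{uv}\rangle:=\langle\!\langle e,f\rangle\!\rangle'_{uj}\,\langle\!\langle e,f\rangle\!\rangle''_{iv},$$ $$[e_{ij},f_{uv}]:=([\![e,f]\!]_l')_{uj}([\![e,f]\!]_l'')_{iv}+([\![e,f]\!]_r')_{uj}([\![e,f]\!]_r'')_{iv}.$$ Then $\partial_N$ extends to a derivation $A_N\to E_N$, $\langle-,-\rangle$ extends to an $A_N$-bilinear form on $E_N$, and $[-,-]$ extends to a well-defined $\Bbbk$-bilinear bracket on $E_N$ satisfying $[x,cy]=c[x,y]+\langle x,\partial_Nc\rangle y$, in such a way that $(A_N,E_N,\langle-,-\rangle,\partial_N,[-,-])$ is a Courant--Dorfman algebra.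
   Context: All algebras are associative unital $\Bbbk$-algebras, $\Bbbk$ a field of characteristic zero, $\otimes=\otimes_\Bbbk$. Sweedler notation: $x=x'\otimes x''$ with summation suppressed; $(x'\otimes x'')^\sigma=x''\otimes x'$. Outer structure on $A\otimes A$, $E\otimes A$, $A\otimes E$: $a(x'\otimes x'')b=ax'\otimes x''b$; inner structure on $A\otimes A$: $a*(x'\otimes x'')*b=x'b\otimes ax''$. For $x=x'\otimes x''$ and $y$: $x\otimes_1y:=x'\otimes y\otimes x''$, $y\otimes_1x:=x'\otimes y\otimes x''$. Double Courant--Dorfman algebra: $A$ an algebra, $E$ an $A$-bimodule, $\partial\colon A\to E$ a derivation, acting on $A\otimes A$ by $\partial(x'\otimes x'')=\partial x'\otimes x''+x'\otimes\partial x''$. A pairing $\langle\!\langle-,-\rangle\!\rangle\colon E\otimes E\to A\otimes A$ is linear with $f\mapsto\langle\!\langle e,f\rangle\!\rangle$ a bimodule map to $(A\otimes A)_{\mathrm{out}}$ and $f\mapsto\langle\!\langle f,e\rangle\!\rangle$ a bimodule map to $(A\otimes A)_{\mathrm{inn}}$; symmetric: $\langle\!\langle e,f\rangle\!\rangle=\langle\!\langle f,e\rangle\!\rangle^\sigma$. Extensions: $\langle\!\langle e,f\otimes a\rangle\!\rangle_L=\langle\!\langle e,f\rangle\!\rangle\otimes a$, $\langle\!\langle e,a\otimes f\rangle\!\rangle_L=0$, $\langle\!\langle e,a\otimes f\rangle\!\rangle_R=a\otimes\langle\!\langle e,f\rangle\!\rangle$, $\langle\!\langle e,f\otimes a\rangle\!\rangle_R=0$,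 $\langle\!\langle e\otimes a,f\rangle\!\rangle_L=\langle\!\langle a\otimes e,f\rangle\!\rangle_R=\langle\!\langle e,f\rangle\!\rangle'\otimes a\otimes\langle\!\langle e,f\rangle\!\rangle''$, $\langle\!\langle a\otimes e,f\rangle\!\rangle_L=\langle\!\langle e\otimes a,f\rangle\!\rangle_R=0$. A double Courant--Dorfman bracket is a linear map $[\![-,-]\!]\colon T_AE\otimes T_AE\to T_AE\otimes T_AE$ of degree $-1$ ($T_AE$ the tensor algebra, $E$ in degree 1) with $[\![e,a]\!]=\langle\!\langle e,\partial a\rangle\!\rangle$, $[\![a,e]\!]=-\langle\!\langle\partial a,e\rangle\!\rangle$, $[\![a,b]\!]=0$; for $e,f\in E$, $[\![e,f]\!]=[\![e,f]\!]_l+[\![e,f]\!]_r\in E\otimes A\oplus A\otimes E$. Extensions: $[\![e,f\otimes a]\!]_L=[\![e,f]\!]\otimes a$, $[\![e,a\otimes f]\!]_L=\langle\!\langle e,\partial a\rangle\!\rangle\otimes f$, $[\![e,f\otimes a]\!]_R=f\otimes\langle\!\langle e,\partial a\rangle\!\rangle$, $[\![e,a\otimes f]\!]_R=a\otimes[\![e,f]\!]$, $[\![e\otimes a,f]\!]_L=[\![e,f]\!]\otimes_1a+\langle\!\langle e,f\rangle\!\rangle\otimes_1\partial a$, $[\![a\otimes e,f]\!]_L=-\langle\!\langle\partial a,f\rangle\!\rangle\otimes_1e$. The axioms, for all $a,b\in A$, $e,f,g\in E$: $\partial\langle\!\langle e,f\rangle\!\rangle=[\![e,f]\!]+[\![f,e]\!]^\sigma$;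 $[\![\partial a,e]\!]=0$; $\langle\!\langle\partial a,\partial b\rangle\!\rangle=0$; $[\![e,fa]\!]=[\![e,f]\!]a+f\langle\!\langle e,\partial a\rangle\!\rangle$; $[\![e,af]\!]=a[\![e,f]\!]+\langle\!\langle e,\partial a\rangle\!\rangle f$; $[\![e,[\![f,g]\!]]\!]_L=[\![f,[\![e,g]\!]]\!]_R+[\![[\![e,f]\!],g]\!]_L$; $\langle\!\langle e,\partial\langle\!\langle f,g\rangle\!\rangle\rangle\!\rangle_L=\langle\!\langle f,[\![e,g]\!]\rangle\!\rangle_R+\langle\!\langle[\![e,f]\!],g\rangle\!\rangle_L$. Representation spaces: $A_N$ is the commutative algebra representing $B\mapsto\operatorname{Hom}_{\mathrm{alg}}(A,M_N(B))$ on commutative algebras; it is generated by symbols $a_{ij}$ ($a\in A$, $1\le i,j\le N$), linear in $a$, with $(ab)_{ij}=\sum_t a_{it}b_{tj}$ and $1_{ij}=\delta_{ij}$. $E_N$ is the $A_N$-module generated by symbols $e_{ij}$, linear in $e\in E$, subject to $(ae)_{ij}=\sum_ta_{it}e_{tj}$ and $(ea)_{ij}=\sum_ta_{tj}e_{it}$. Repeated indices are summed. Courant--Dorfman algebra: a commutative algebra $C$, a $C$-module $M$, a symmetric $C$-bilinear form $\langle-,-\rangle\colon M\otimes M\to C$, a derivation $\partial\colon C\to M$, and a bilinear bracket $[-,-]$ on $M$ such that for $n,n_1,n_2,n_3\in M$, $c,d\in C$: $[n_1,cn_2]=c[n_1,n_2]+\langle n_1,\partial c\rangle n_2$; $\langle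 n_1,\partial\langle n_2,n_3\rangle\rangle=\langle[n_1,n_2],n_3\rangle+\langle n_2,[n_1,n_3]\rangle$; $\partial\langle n_1,n_2\rangle=[n_1,n_2]+[n_2,n_1]$; $[n_1,[n_2,n_3]]=[[n_1,n_2],n_3]+[n_2,[n_1,n_3]]$; $[\partial c,n]=0$; $\langle\partial c,\partial d\rangle=0$. *)

From HB Require Import structures.
From mathcomp Require Import all_boot all_order all_algebra.
Set Implicit Arguments. Unset Strict Implicit. Unset Printing Implicit Defensive.
Import GRing.Theory.
Local Open Scope ring_scope.

Definition lin (R : pzRingType) (U V : lmodType R) (f : U -> V) : Prop :=
  forall (k : R) (u1 u2 : U), f (k *: u1 + u2) = k *: f u1 + f u2.

Definition bilin (R : pzRingType) (U V W : lmodType R) (b : U -> V -> W) : Prop :=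
  (forall k u1 u2 v, b (k *: u1 + u2) v = k *: b u1 v + b u2 v) /\
  (forall k u v1 v2, b u (k *: v1 + v2) = k *: b u v1 + b u v2).

Definition trilin (R : pzRingType) (U V X W : lmodType R) (t : U -> V -> X -> W) : Prop :=
  (forall k u1 u2 v x, t (k *: u1 + u2) v x = k *: t u1 v x + t u2 v x) /\
  (forall k u v1 v2 x, t u (k *: v1 + v2) x = k *: t u v1 x + t u v2 x) /\
  (forall k u v x1 x2, t u v (k *: x1 + x2) = k *: t u v x1 + t u v x2).

(* Tensor products over K.  An element of U (x) V is represented by a finite *)
(* list of pairs (sum of elementary tensors, Sweedler notation); two lists   *)
(* represent the same tensor iff every bilinear map takes the same value on  *)
(* them (universal property of U (x) V).  Likewise for U (x) V (x) X.        *)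

Definition teq2 (K : fieldType) (U V : lmodType K) (s t : seq (U * V)) : Prop :=
  forall (W : lmodType K) (b : U -> V -> W), bilin b ->
    \sum_(p <- s) b p.1 p.2 = \sum_(p <- t) b p.1 p.2.

Definition teq3 (K : fieldType) (U V X : lmodType K) (s t : seq (U * V * X)) : Prop :=
  forall (W : lmodType K) (b : U -> V -> X -> W), trilin b ->
    \sum_(p <- s) b p.1.1 p.1.2 p.2 = \sum_(p <- t) b p.1.1 p.1.2 p.2.

Definition tscale (K : fieldType) (U V : lmodType K) (k : K) (s : seq (U * V)) :
  seq (U * V) := [seq (k *: p.1, p.2) | p <- s].

Definition tswap (U V : Type) (s : seq (U * V)) : seq (V * U) :=
  [seq (p.2, p.1) | p <- s].

Definition is_bimodule (K : fieldType) (A : algType K) (E : lmodType K)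
    (la : A -> E -> E) (ra : E -> A -> E) : Prop :=
  bilin la /\ bilin ra /\
  (forall a b e, la (a * b) e = la a (la b e)) /\
  (forall a b e, ra e (a * b) = ra (ra e a) b) /\
  (forall a b e, la a (ra e b) = ra (la a e) b) /\
  (forall e, la 1 e = e) /\
  (forall e, ra e 1 = e).

Definition is_bimod_derivation (K : fieldType) (A : algType K) (E : lmodType K)
    (la : A -> E -> E) (ra : E -> A -> E) (d : A -> E) : Prop :=
  lin d /\ forall a b, d (a * b) = ra (d a) b + la a (d b).

(* dp e f  : a representative of <<e,f>> in A (x) A                          *)
(* dbl e f : a representative of [[e,f]]_l in E (x) A                        *)
(* dbr e f : a representative of [[e,f]]_r in A (x) E                        *)

Record is_double_CD_algebra (K : fieldType) (A : algType K) (E : lmodType K)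
    (la : A -> E -> E) (ra : E -> A -> E) (d : A -> E)
    (dp : E -> E -> seq (A * A)) (dbl : E -> E -> seq (E * A))
    (dbr : E -> E -> seq (A * E)) : Prop := {
  dcd_bimodule : is_bimodule la ra;
  dcd_derivation : is_bimod_derivation la ra d;
  dcd_pair_lin_l : forall k e1 e2 f,
    teq2 (dp (k *: e1 + e2) f) (tscale k (dp e1 f) ++ dp e2 f);
  dcd_pair_lin_r : forall k e f1 f2,
    teq2 (dp e (k *: f1 + f2)) (tscale k (dp e f1) ++ dp e f2);
  (* f |-> <<e,f>> is a bimodule map to (A (x) A)_out *)
  dcd_pair_out_l : forall e a f,
    teq2 (dp e (la a f)) [seq (a * p.1, p.2) | p <- dp e f];
  dcd_pair_out_r : forall e f b,
    teq2 (dp e (ra f b)) [seq (p.1, p.2 * b) | p <- dp e f];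
  (* f |-> <<f,e>> is a bimodule map to (A (x) A)_inn *)
  dcd_pair_inn_l : forall e a f,
    teq2 (dp (la a f) e) [seq (p.1, a * p.2) | p <- dp f e];
  dcd_pair_inn_r : forall e f b,
    teq2 (dp (ra f b) e) [seq (p.1 * b, p.2) | p <- dp f e];
  dcd_pair_sym : forall e f, teq2 (dp e f) (tswap (dp f e));
  dcd_brl_lin_l : forall k e1 e2 f,
    teq2 (dbl (k *: e1 + e2) f) (tscale k (dbl e1 f) ++ dbl e2 f);
  dcd_brl_lin_r : forall k e f1 f2,
    teq2 (dbl e (k *: f1 + f2)) (tscale k (dbl e f1) ++ dbl e f2);
  dcd_brr_lin_l : forall k e1 e2 f,
    teq2 (dbr (k *: e1 + e2) f) (tscale k (dbr e1 f) ++ dbr e2 f);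
  dcd_brr_lin_r : forall k e f1 f2,
    teq2 (dbr e (k *: f1 + f2)) (tscale k (dbr e f1) ++ dbr e f2);
  (* d<<e,f>> = [[e,f]] + [[f,e]]^sigma  (E (x) A and A (x) E components) *)
  dcd_ax1_EA : forall e f,
    teq2 [seq (d p.1, p.2) | p <- dp e f] (dbl e f ++ tswap (dbr f e));
  dcd_ax1_AE : forall e f,
    teq2 [seq (p.1, d p.2) | p <- dp e f] (dbr e f ++ tswap (dbl f e));
  dcd_ax2_l : forall a e, teq2 (dbl (d a) e) [::];
  dcd_ax2_r : forall a e, teq2 (dbr (d a) e) [::];
  dcd_ax3 : forall a b, teq2 (dp (d a) (d b)) [::];
  (* [[e, fa]] = [[e,f]] a + f <<e, da>> *)
  dcd_ax4_EA : forall e f a,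
    teq2 (dbl e (ra f a))
         ([seq (p.1, p.2 * a) | p <- dbl e f] ++ [seq (ra f p.1, p.2) | p <- dp e (d a)]);
  dcd_ax4_AE : forall e f a,
    teq2 (dbr e (ra f a)) [seq (p.1, ra p.2 a) | p <- dbr e f];
  (* [[e, af]] = a [[e,f]] + <<e, da>> f *)
  dcd_ax5_EA : forall e f a,
    teq2 (dbl e (la a f)) [seq (la a p.1, p.2) | p <- dbl e f];
  dcd_ax5_AE : forall e f a,
    teq2 (dbr e (la a f))
         ([seq (a * p.1, p.2) | p <- dbr e f] ++ [seq (p.1, la p.2 f) | p <- dp e (d a)]);
  (* [[e,[[f,g]]]]_L = [[f,[[e,g]]]]_R + [[[[e,f]],g]]_L, in the three
     components E(x)A(x)A, A(x)E(x)A, A(x)A(x)E *)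
  dcd_ax6_EAA : forall e f g,
    teq3 (flatten [seq [seq (q.1, q.2, p.2) | q <- dbl e p.1] | p <- dbl f g])
         (flatten [seq [seq (p.1, q.1, q.2) | q <- dp f (d p.2)] | p <- dbl e g] ++
          flatten [seq [seq (q.1, p.2, q.2) | q <- dbl p.1 g] | p <- dbl e f]);
  dcd_ax6_AEA : forall e f g,
    teq3 (flatten [seq [seq (q.1, q.2, p.2) | q <- dbr e p.1] | p <- dbl f g])
         (flatten [seq [seq (p.1, q.1, q.2) | q <- dbl f p.2] | p <- dbr e g] ++
          flatten [seq [seq (q.1, d p.2, q.2) | q <- dp p.1 g] | p <- dbl e f] ++
          flatten [seq [seq (- q.1, p.2, q.2) | q <- dp (d p.1) g] | p <- dbr e f]);
  dcd_ax6_AAE : forall e f g,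
    teq3 (flatten [seq [seq (q.1, q.2, p.2) | q <- dp e (d p.1)] | p <- dbr f g])
         (flatten [seq [seq (p.1, q.1, q.2) | q <- dbr f p.2] | p <- dbr e g] ++
          flatten [seq [seq (q.1, p.2, q.2) | q <- dbr p.1 g] | p <- dbl e f]);
  (* <<e, d<<f,g>>>>_L = <<f,[[e,g]]>>_R + <<[[e,f]],g>>_L  in A(x)A(x)A *)
  dcd_ax7 : forall e f g,
    teq3 (flatten [seq [seq (q.1, q.2, p.2) | q <- dp e (d p.1)] | p <- dp f g])
         (flatten [seq [seq (p.1, q.1, q.2) | q <- dp f p.2] | p <- dbr e g] ++
          flatten [seq [seq (q.1, p.2, q.2) | q <- dp p.1 g] | p <- dbl e f])
}.

(* Representation spaces A_N and E_N, given by their universal properties    *)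
(* (equivalently: by the generators and relations of the paper).             *)

(* y : A -> M_N(B) (entrywise) is a unital algebra morphism *)
Definition rep_rel (K : fieldType) (A : algType K) (N : nat) (B : comAlgType K)
    (y : A -> 'I_N -> 'I_N -> B) : Prop :=
  [/\ (forall i j, lin (fun a => y a i j)),
      (forall a b i j, y (a * b) i j = \sum_(t < N) y a i t * y b t j) &
      (forall i j, y 1 i j = (i == j)%:R)].

Definition is_alg_morph (K : fieldType) (B1 B2 : comAlgType K) (phi : B1 -> B2) : Prop :=
  [/\ lin phi, (forall b c, phi (b * c) = phi b * phi c) & phi 1 = 1].

(* (C, x) is the representation algebra A_N with generators x a i j = a_ij *)
Definition is_rep_algebra (K : fieldType) (A : algType K) (N : nat)
    (C : comAlgType K) (x : A -> 'I_N -> 'I_N -> C) : Prop :=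
  rep_rel x /\
  forall (B : comAlgType K) (y : A -> 'I_N -> 'I_N -> B), rep_rel y ->
    exists phi : C -> B,
      [/\ is_alg_morph phi, (forall a i j, phi (x a i j) = y a i j) &
          forall psi : C -> B, is_alg_morph psi ->
            (forall a i j, psi (x a i j) = y a i j) -> forall c, psi c = phi c].

Definition rep_mod_rel (K : fieldType) (A : algType K) (E : lmodType K)
    (la : A -> E -> E) (ra : E -> A -> E) (N : nat)
    (C : comAlgType K) (x : A -> 'I_N -> 'I_N -> C)
    (M : lmodType C) (eps : E -> 'I_N -> 'I_N -> M) : Prop :=
  [/\ (forall (k : K) e1 e2 i j, eps (k *: e1 + e2) i j = k%:A *: eps e1 i j + eps e2 i j),
      (forall a e i j, eps (la a e) i j = \sum_(t < N) x a i t *: eps e t j) &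
      (forall a e i j, eps (ra e a) i j = \sum_(t < N) x a t j *: eps e i t)].

(* (M, eps) is the representation module E_N over C = A_N, generators e_ij *)
Definition is_rep_module (K : fieldType) (A : algType K) (E : lmodType K)
    (la : A -> E -> E) (ra : E -> A -> E) (N : nat)
    (C : comAlgType K) (x : A -> 'I_N -> 'I_N -> C)
    (M : lmodType C) (eps : E -> 'I_N -> 'I_N -> M) : Prop :=
  rep_mod_rel la ra x eps /\
  forall (M' : lmodType C) (eps' : E -> 'I_N -> 'I_N -> M'), rep_mod_rel la ra x eps' ->
    exists phi : M -> M',
      [/\ lin phi, (forall e i j, phi (eps e i j) = eps' e i j) &
          forall psi : M -> M', lin psi ->
            (forall e i j, psi (eps e i j) = eps' e i j) -> forall m, psi m = phi m].

Record is_CD_algebra (K : fieldType) (C : comAlgType K) (M : lmodType C)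
    (pair : M -> M -> C) (d : C -> M) (br : M -> M -> M) : Prop := {
  cd_pair_lin : forall (c : C) m1 m2 n, pair (c *: m1 + m2) n = c * pair m1 n + pair m2 n;
  cd_pair_sym : forall m n, pair m n = pair n m;
  cd_d_lin : forall (k : K) c1 c2, d (k *: c1 + c2) = k%:A *: d c1 + d c2;
  cd_d_leibniz : forall c1 c2, d (c1 * c2) = c1 *: d c2 + c2 *: d c1;
  cd_br_lin_l : forall (k : K) m1 m2 n, br (k%:A *: m1 + m2) n = k%:A *: br m1 n + br m2 n;
  cd_br_lin_r : forall (k : K) m n1 n2, br m (k%:A *: n1 + n2) = k%:A *: br m n1 + br m n2;
  cd_leibniz : forall n1 n2 (c : C), br n1 (c *: n2) = c *: br n1 n2 + pair n1 (d c) *: n2;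
  cd_invariance : forall n1 n2 n3,
    pair n1 (d (pair n2 n3)) = pair (br n1 n2) n3 + pair n2 (br n1 n3);
  cd_symmetric : forall n1 n2, d (pair n1 n2) = br n1 n2 + br n2 n1;
  cd_jacobi : forall n1 n2 n3, br n1 (br n2 n3) = br (br n1 n2) n3 + br n2 (br n1 n3);
  cd_br_d : forall (c : C) n, br (d c) n = 0;
  cd_pair_dd : forall c c' : C, pair (d c) (d c') = 0
}.

From HB Require Import structures.
From mathcomp Require Import all_boot all_order all_algebra ring.
From Stdlib Require Import IndefiniteDescription.
Set Implicit Arguments. Unset Strict Implicit. Unset Printing Implicit Defensive.
Import GRing.Theory.
Local Open Scope ring_scope.

(* A_N and E_N are only known through their universal properties, so every
   structure on them is produced by checking relations on the generators a_ij and
   e_ij.  The derivation d_N is the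
   second component of the algebra morphism from A_N to the dual numbers
   A_N + E_N sending a_ij to a_ij + (d a)_ij.  The pairing comes from the module
   universal property applied in one argument and then in the other.  The bracket
   is not A_N-linear but twisted-linear, [m, c n] = c [m, n] + <m, d_N c> n and
   similarly in m; such maps are module maps into M + M with a scalar action
   twisted by a cocycle, so the universal property of E_N produces them as well.
   Each Courant-Dorfman identity holds on generators by the corresponding axiom
   of the double algebra, and both of its sides are twisted-linear with the same
   twist in every argument, so it propagates from generators to all of E_N. *)

Definition witness (T : Type) (P : T -> Prop) (H : exists t, P t) : T :=
  proj1_sig (constructive_indefinite_description P H).

Lemma witnessP (T : Type) (P : T -> Prop) (H : exists t, P t) : P (witness H).
Proof. exact: proj2_sig (constructive_indefinite_description P H). Qed.

Lemma idem_add_eq0 (V : zmodType) (v : V) : v = v + v -> v = 0.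
Proof. by move=> Hv; apply: (@addrI _ v); rewrite addr0 -Hv. Qed.

Section LinearFacts.
Variables (R : pzRingType) (U V : lmodType R) (f : U -> V).
Hypothesis f_lin : lin f.

Lemma linD u v : f (u + v) = f u + f v.
Proof. by have := f_lin 1 u v; rewrite !scale1r. Qed.

Lemma lin0 : f 0 = 0.
Proof. by apply: idem_add_eq0; rewrite -linD addr0. Qed.

Lemma linZ k u : f (k *: u) = k *: f u.
Proof. by have := f_lin k u 0; rewrite !addr0 lin0 addr0. Qed.

Lemma linN u : f (- u) = - f u.
Proof. by rewrite -scaleN1r linZ scaleN1r. Qed.

Lemma lin_sum (J : Type) (s : seq J) (F : J -> U) :
  f (\sum_(j <- s) F j) = \sum_(j <- s) f (F j).
Proof. by elim: s => [|a s IH]; rewrite ?big_nil ?lin0 // !big_cons linD IH. Qed.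

End LinearFacts.

Section BilinearFacts.
Variables (R : fieldType) (U V W : lmodType R) (b : U -> V -> W).
Hypothesis b_bilin : bilin b.

Lemma bilZl k u v : b (k *: u) v = k *: b u v.
Proof.
have b0 : b 0 v = 0.
  by apply: idem_add_eq0; have := b_bilin.1 1 0 0 v; rewrite !scale1r !addr0.
by have := b_bilin.1 k u 0 v; rewrite !addr0 b0 addr0.
Qed.

Lemma sum_tscale k (s : seq (U * V)) :
  \sum_(p <- tscale k s) b p.1 p.2 = k *: \sum_(p <- s) b p.1 p.2.
Proof. by rewrite big_map scaler_sumr; apply: eq_bigr => p _; rewrite bilZl. Qed.

Lemma teq2_sum (s t : seq (U * V)) :
  teq2 s t -> \sum_(p <- s) b p.1 p.2 = \sum_(p <- t) b p.1 p.2.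
Proof. by move=> /(_ W b b_bilin). Qed.

End BilinearFacts.

Lemma teq3_sum (R : fieldType) (U V X W : lmodType R) (t : U -> V -> X -> W)
    (s s' : seq (U * V * X)) : trilin t -> teq3 s s' ->
  \sum_(p <- s) t p.1.1 p.1.2 p.2 = \sum_(p <- s') t p.1.1 p.1.2 p.2.
Proof. by move=> Ht /(_ W t Ht). Qed.

Lemma sum_flatten_map (S T U : Type) (W : nmodType) (s : seq S) (g : S -> seq T)
    (h : S -> T -> U) (F : U -> W) :
  \sum_(r <- flatten [seq [seq h p q | q <- g p] | p <- s]) F r =
  \sum_(p <- s) \sum_(q <- g p) F (h p q).
Proof. by rewrite big_flatten big_map; apply: eq_bigr => p _; rewrite big_map. Qed.

(** * Restriction of scalars, dual numbers and twisted modules *)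

Section RestrictScalars.
Variables (K : fieldType) (C : comAlgType K) (V : lmodType C).

Definition restrK : Type := V.
HB.instance Definition _ := GRing.Zmodule.on restrK.

Definition restrK_scale (k : K) (v : restrK) : restrK := (k%:A : C) *: (v : V).

Lemma restrK_scaleA a b v : restrK_scale a (restrK_scale b v) = restrK_scale (a * b) v.
Proof. by rewrite /restrK_scale scalerA mulr_algl scalerA. Qed.
Lemma restrK_scale1 : left_id 1 restrK_scale.
Proof. by move=> v; rewrite /restrK_scale !scale1r. Qed.
Lemma restrK_scaleDr : right_distributive restrK_scale +%R.
Proof. by move=> a u v; rewrite /restrK_scale scalerDr. Qed.
Lemma restrK_scaleDl v : {morph restrK_scale^~ v : a b / a + b}.
Proof. by move=> a b; rewrite /restrK_scale !scalerDl. Qed.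

HB.instance Definition _ := GRing.Zmodule_isLmodule.Build K restrK
  restrK_scaleA restrK_scale1 restrK_scaleDr restrK_scaleDl.

Lemma restrK_scaleE (k : K) (v : restrK) : k *: v = (k%:A : C) *: (v : V).
Proof. by []. Qed.

End RestrictScalars.

Section DualNumbers.
Variables (K : fieldType) (C : comAlgType K) (V : lmodType C).

Definition dual : Type := (C * V)%type.
HB.instance Definition _ := GRing.Zmodule.on dual.

Definition dual_mul (p q : dual) : dual := (p.1 * q.1, p.1 *: q.2 + q.1 *: p.2).
Definition dual_one : dual := (1, 0).

Lemma dual_mulA : associative dual_mul.
Proof.
move=> [a u] [b v] [c w]; rewrite /dual_mul /=; congr pair; first by rewrite mulrA.
by rewrite !scalerDr !scalerA -addrA [c * a]mulrC [b * c]mulrC.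
Qed.
Lemma dual_mulC : commutative dual_mul.
Proof. by move=> [a u] [b v]; rewrite /dual_mul /= mulrC addrC. Qed.
Lemma dual_mul1 : left_id dual_one dual_mul.
Proof. by move=> [a u]; rewrite /dual_mul /= mul1r scale1r scaler0 addr0. Qed.
Lemma dual_mulDl : left_distributive dual_mul +%R.
Proof.
move=> [a u] [b v] [c w]; rewrite /dual_mul /=; congr pair; first by rewrite mulrDl.
by rewrite scalerDl scalerDr addrACA.
Qed.
Lemma dual_one_neq0 : dual_one != 0.
Proof. by apply/negP => /eqP [] /eqP; rewrite oner_eq0. Qed.

HB.instance Definition _ := GRing.Zmodule_isComNzRing.Build dual
  dual_mulA dual_mulC dual_mul1 dual_mulDl dual_one_neq0.

Definition dual_scale (k : K) (p : dual) : dual := (k *: p.1, (k%:A : C) *: p.2).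

Lemma dual_scaleA a b v : dual_scale a (dual_scale b v) = dual_scale (a * b) v.
Proof. by rewrite /dual_scale /= !scalerA mulr_algl scalerA. Qed.
Lemma dual_scale1 : left_id 1 dual_scale.
Proof. by move=> [u v]; rewrite /dual_scale /= !scale1r. Qed.
Lemma dual_scaleDr : right_distributive dual_scale +%R.
Proof. by move=> a [u v] [u' v']; rewrite /dual_scale /= !scalerDr. Qed.
Lemma dual_scaleDl v : {morph dual_scale^~ v : a b / a + b}.
Proof. by move=> a b; rewrite /dual_scale /= !scalerDl. Qed.

HB.instance Definition _ := GRing.Zmodule_isLmodule.Build K dual
  dual_scaleA dual_scale1 dual_scaleDr dual_scaleDl.

Lemma dual_scaleAl (k : K) (u v : dual) : k *: (u * v) = (k *: u) * v.
Proof.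
case: u v => [a u] [b w]; rewrite /GRing.scale /= /dual_scale /GRing.mul /= /dual_mul /=.
by congr pair; rewrite ?scalerAl // scalerDr !scalerA -scalerAl mul1r mulrC.
Qed.

HB.instance Definition _ := GRing.Lmodule_isLalgebra.Build K dual dual_scaleAl.
HB.instance Definition _ := GRing.Lalgebra_isComAlgebra.Build K dual.

Lemma dual_addE (p q : dual) : p + q = (p.1 + q.1, p.2 + q.2). Proof. by []. Qed.
Lemma dual_oppE (p : dual) : - p = (- p.1, - p.2). Proof. by []. Qed.
Lemma dual_mulE (p q : dual) : p * q = (p.1 * q.1, p.1 *: q.2 + q.1 *: p.2).
Proof. by []. Qed.
Lemma dual_scaleE (k : K) (p : dual) : k *: p = (k *: p.1, (k%:A : C) *: p.2).
Proof. by []. Qed.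
Lemma dual_sumE (J : Type) (s : seq J) (F : J -> dual) :
  \sum_(j <- s) F j = (\sum_(j <- s) (F j).1, \sum_(j <- s) (F j).2).
Proof. by elim: s => [|a s IH]; rewrite ?big_nil // !big_cons IH. Qed.

Definition dual_vec (v : V) : dual := (0, v).
Definition dual_sc (c : C) : dual := (c, 0).

Lemma dual_vec_inj : injective dual_vec. Proof. by move=> u v []. Qed.
Lemma dual_vecD u v : dual_vec (u + v) = dual_vec u + dual_vec v.
Proof. by rewrite /dual_vec dual_addE /= addr0. Qed.
Lemma dual_vecN u : dual_vec (- u) = - dual_vec u.
Proof. by rewrite /dual_vec dual_oppE /= oppr0. Qed.
Lemma dual_vec0 : dual_vec 0 = 0. Proof. by []. Qed.
Lemma dual_vecZ (c : C) u : dual_vec (c *: u) = dual_sc c * dual_vec u.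
Proof. by rewrite /dual_vec /dual_sc dual_mulE /= mulr0 scaler0 addr0. Qed.
Lemma dual_scD a b : dual_sc (a + b) = dual_sc a + dual_sc b.
Proof. by rewrite /dual_sc dual_addE /= addr0. Qed.
Lemma dual_scN a : dual_sc (- a) = - dual_sc a.
Proof. by rewrite /dual_sc dual_oppE /= oppr0. Qed.
Lemma dual_scM a b : dual_sc (a * b) = dual_sc a * dual_sc b.
Proof. by rewrite /dual_sc dual_mulE /= !scaler0 addr0. Qed.
Lemma dual_sc0 : dual_sc 0 = 0. Proof. by []. Qed.
Lemma dual_sc1 : dual_sc 1 = 1. Proof. by []. Qed.
Definition dual_alg (k : K) : dual := dual_sc k%:A.
Lemma dual_scZ (k : K) (c : C) : dual_sc (k *: c) = dual_alg k * dual_sc c.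
Proof. by rewrite /dual_alg -dual_scM mulr_algl. Qed.

End DualNumbers.

(* V embeds in the commutative ring [dual V] as a square-zero ideal, so linear
   identities in a C-module become ring identities there. *)
Ltac lmod_ring_close :=
  rewrite ?(dual_vecD, dual_vecN, dual_vecZ, dual_vec0, dual_scD, dual_scN,
            dual_scM, dual_sc0, dual_sc1, dual_scZ);
  ring.
Ltac lmod_ring := apply: dual_vec_inj; lmod_ring_close.
Ltac lmod_ring_at V := apply: (@dual_vec_inj _ _ V); lmod_ring_close.

Section Derivations.
Variables (K : fieldType) (C : comAlgType K).

Definition is_derivation (V : lmodType C) (delta : C -> V) : Prop :=
  lin (delta : C -> restrK V) /\ forall c c', delta (c * c') = c *: delta c' + c' *: delta c.

Variables (V : lmodType C) (delta : C -> V).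
Hypothesis delta_der : is_derivation delta.

Lemma derivation1 : delta 1 = 0.
Proof. by apply: idem_add_eq0; rewrite -{1}(mulr1 1) delta_der.2 scale1r. Qed.

Lemma derivation_alg (k : K) : delta k%:A = 0.
Proof. by rewrite (linZ delta_der.1) derivation1 scaler0. Qed.

Lemma derivation_dual_morph : is_alg_morph (fun c => (c, delta c) : dual V).
Proof.
split=> [k c c'|c c'|]; last by rewrite derivation1.
- by rewrite dual_addE dual_scaleE /= delta_der.1.
- by rewrite dual_mulE /= delta_der.2.
Qed.

End Derivations.

Record cocycle (K : fieldType) (C : comAlgType K) (M V : lmodType C) := Cocycle {
  cocycle_fun :> C -> M -> V;
  cocycleDl : forall c c' m, cocycle_fun (c + c') m = cocycle_fun c m + cocycle_fun c' m;
  cocycleDr : forall c m m', cocycle_fun c (m + m') = cocycle_fun c m + cocycle_fun c m';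
  cocycleM : forall c c' m,
    cocycle_fun (c * c') m = c *: cocycle_fun c' m + cocycle_fun c (c' *: m) }.

Section TwistedModule.
Variables (K : fieldType) (C : comAlgType K) (M V : lmodType C) (Phi : cocycle M V).

Lemma cocycle1 m : Phi 1 m = 0.
Proof.
by apply: idem_add_eq0; rewrite -{1}(mulr1 1) cocycleM scale1r scale1r.
Qed.

(* The unused argument keeps the types of different twists apart. *)
Definition twisted (P : cocycle M V) : Type := (M * V)%type.
HB.instance Definition _ := GRing.Zmodule.on (twisted Phi).

Definition twisted_scale (c : C) (p : twisted Phi) : twisted Phi :=
  (c *: p.1, c *: p.2 + Phi c p.1).

Lemma twisted_scaleA a b v :
  twisted_scale a (twisted_scale b v) = twisted_scale (a * b) v.
Proof.
by rewrite /twisted_scale /= cocycleM !scalerA scalerDr scalerA addrA.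
Qed.
Lemma twisted_scale1 : left_id 1 twisted_scale.
Proof. by move=> [u v]; rewrite /twisted_scale /= cocycle1 !scale1r addr0. Qed.
Lemma twisted_scaleDr : right_distributive twisted_scale +%R.
Proof.
move=> a [u v] [u' v']; rewrite /twisted_scale /=.
congr pair; first by rewrite scalerDr.
by rewrite scalerDr cocycleDr addrACA.
Qed.
Lemma twisted_scaleDl v : {morph twisted_scale^~ v : a b / a + b}.
Proof.
move=> a b; rewrite /twisted_scale /=.
congr pair; first by rewrite scalerDl.
by rewrite scalerDl cocycleDl addrACA.
Qed.

HB.instance Definition _ := GRing.Zmodule_isLmodule.Build C (twisted Phi)
  twisted_scaleA twisted_scale1 twisted_scaleDr twisted_scaleDl.

Lemma twisted_scaleE c (p : twisted Phi) : c *: p = (c *: p.1, c *: p.2 + Phi c p.1).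
Proof. by []. Qed.
Lemma twisted_addE (p q : twisted Phi) : p + q = (p.1 + q.1, p.2 + q.2).
Proof. by []. Qed.
Lemma twisted_sumE (J : Type) (s : seq J) (F : J -> twisted Phi) :
  \sum_(j <- s) F j = (\sum_(j <- s) (F j).1, \sum_(j <- s) (F j).2).
Proof. by elim: s => [|a s IH]; rewrite ?big_nil // !big_cons IH. Qed.

End TwistedModule.

(** * Generators of the representation spaces *)

Section RepresentationSpaces.
Variables (K : fieldType) (A : algType K) (E : lmodType K)
  (la : A -> E -> E) (ra : E -> A -> E) (d : A -> E)
  (dp : E -> E -> seq (A * A)) (dbl : E -> E -> seq (E * A)) (dbr : E -> E -> seq (A * E)).
Hypothesis HDCD : is_double_CD_algebra la ra d dp dbl dbr.
Variables (N : nat) (C : comAlgType K) (x : A -> 'I_N -> 'I_N -> C)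
  (M : lmodType C) (eps : E -> 'I_N -> 'I_N -> M).
Hypotheses (HC : is_rep_algebra x) (HM : is_rep_module la ra x eps).

Local Notation I := 'I_N.
Local Notation MK := (restrK M).

Lemma x_lin i j : lin (fun a => x a i j). Proof. by case: HC => [[]]. Qed.
Lemma xN i j a : x (- a) i j = - x a i j. Proof. exact: (linN (x_lin i j) a). Qed.
Lemma xM a b i j : x (a * b) i j = \sum_(t < N) x a i t * x b t j.
Proof. by case: HC => [[_ + _] _]; apply. Qed.
Lemma x1 i j : x 1 i j = (i == j)%:R. Proof. by case: HC => [[_ _ +] _]; apply. Qed.

Lemma eps_lin i j : lin (fun e => eps e i j : MK).
Proof. by move=> k e1 e2; case: HM => [[+ _ _] _]; apply. Qed.
Lemma eps_scaleD (k : K) e1 e2 i j : eps (k *: e1 + e2) i j = k%:A *: eps e1 i j + eps e2 i j.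
Proof. exact: eps_lin. Qed.
Lemma epsD e1 e2 i j : eps (e1 + e2) i j = eps e1 i j + eps e2 i j.
Proof. exact: (linD (eps_lin i j) e1 e2). Qed.
Lemma eps0 i j : eps 0 i j = 0. Proof. exact: (lin0 (eps_lin i j)). Qed.
Lemma eps_la a e i j : eps (la a e) i j = \sum_(t < N) x a i t *: eps e t j.
Proof. by case: HM => [[_ + _] _]; apply. Qed.
Lemma eps_ra a e i j : eps (ra e a) i j = \sum_(t < N) x a t j *: eps e i t.
Proof. by case: HM => [[_ _ +] _]; apply. Qed.

Lemma d_lin : lin d. Proof. by case: (dcd_derivation HDCD). Qed.
Lemma dM a b : d (a * b) = ra (d a) b + la a (d b).
Proof. by case: (dcd_derivation HDCD) => _; apply. Qed.
Lemma d1 : d 1 = 0.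
Proof.
have [_ [_ [_ [_ [_ [la1 ra1]]]]]] := dcd_bimodule HDCD.
by apply: idem_add_eq0; rewrite -{1}(mulr1 1) dM la1 ra1.
Qed.

Lemma rep_mod_rel_lin (V : lmodType C) (p : M -> V) : lin p ->
  rep_mod_rel la ra x (fun e i j => p (eps e i j)).
Proof.
move=> p_lin; split=> [k e1 e2 i j|a e i j|a e i j]; first by rewrite (eps_lin i j) p_lin.
- by rewrite eps_la (lin_sum p_lin); apply: eq_bigr => t _; rewrite (linZ p_lin).
- by rewrite eps_ra (lin_sum p_lin); apply: eq_bigr => t _; rewrite (linZ p_lin).
Qed.

Lemma lin_eps_eq (V : lmodType C) (p1 p2 : M -> V) : lin p1 -> lin p2 ->
  (forall e i j, p1 (eps e i j) = p2 (eps e i j)) -> forall m, p1 m = p2 m.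
Proof.
move=> p1_lin p2_lin p12 m; have [phi [_ _ phi_uniq]] := HM.2 V _ (rep_mod_rel_lin p1_lin).
by rewrite (phi_uniq p1) // (phi_uniq p2) // => e i j; rewrite p12.
Qed.

Lemma lin_eps_ex (V : lmodType C) (g : E -> I -> I -> V) : rep_mod_rel la ra x g ->
  exists p : M -> V, lin p /\ forall e i j, p (eps e i j) = g e i j.
Proof. by move=> /(HM.2 V) [phi [? ? _]]; exists phi. Qed.

Lemma alg_morph_rep_rel (B : comAlgType K) (psi : C -> B) : is_alg_morph psi ->
  rep_rel (fun a i j => psi (x a i j)).
Proof.
case=> psi_lin psiM psi1; split=> [i j k a b|a b i j|i j] /=.
- by rewrite x_lin psi_lin.
- by rewrite xM (lin_sum psi_lin); apply: eq_bigr => t _; rewrite psiM.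
- by rewrite x1; case: (i == j); rewrite ?psi1 ?(lin0 psi_lin).
Qed.

Lemma alg_morph_x_eq (B : comAlgType K) (p1 p2 : C -> B) : is_alg_morph p1 -> is_alg_morph p2 ->
  (forall a i j, p1 (x a i j) = p2 (x a i j)) -> forall c, p1 c = p2 c.
Proof.
move=> p1_morph p2_morph p12 c.
have [phi [_ _ phi_uniq]] := HC.2 B _ (alg_morph_rep_rel p1_morph).
by rewrite (phi_uniq p1) // (phi_uniq p2) // => a i j; rewrite p12.
Qed.

Lemma derivation_x_eq0 (V : lmodType C) (delta : C -> V) : is_derivation delta ->
  (forall a i j, delta (x a i j) = 0) -> forall c, delta c = 0.
Proof.
move=> delta_der delta_x0 c.
have zero_der : is_derivation (fun _ : C => 0 : V).
  by split=> [k c1 c2|c1 c2] /=; rewrite !scaler0 addr0.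
have [] : ((c, delta c) : dual V) = (c, 0).
  apply: (alg_morph_x_eq (derivation_dual_morph delta_der) (derivation_dual_morph zero_der)).
  by move=> a i j; rewrite delta_x0.
by [].
Qed.

Lemma derivation_x_ex : exists dN : C -> M,
  is_derivation dN /\ forall a i j, dN (x a i j) = eps (d a) i j.
Proof.
pose y a i j : dual M := (x a i j, eps (d a) i j).
have y_rel : rep_rel y.
  split=> [i j k a b|a b i j|i j]; rewrite /y.
  - by rewrite dual_addE dual_scaleE /= x_lin d_lin (eps_lin i j).
  - rewrite dual_sumE /= xM dM epsD eps_ra eps_la addrC -big_split /=.
    by congr pair; apply: eq_bigr.
  - by rewrite x1 d1 eps0; case: (i == j).
have [phi [[phi_lin phiM phi1] phi_y _]] := HC.2 _ _ y_rel.
have phi1_id c : (phi c).1 = c.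
  have fst_morph : is_alg_morph (fun c => (phi c).1).
    by split=> [k u v|u v|] /=; rewrite ?phi_lin ?phiM ?phi1.
  have id_morph : is_alg_morph (fun c : C => c) by [].
  by apply: (alg_morph_x_eq fst_morph id_morph) => a i j /=; rewrite phi_y.
exists (fun c => (phi c).2); split; last by move=> a i j; rewrite phi_y.
by split=> [k c c'|c c']; rewrite ?phi_lin ?phiM //= !phi1_id.
Qed.

Lemma twisted_eps_eq (V : lmodType C) (Phi : C -> M -> V) (B1 B2 : M -> V) :
  (forall c m m', B1 (c *: m + m') = c *: B1 m + Phi c m + B1 m') ->
  (forall c m m', B2 (c *: m + m') = c *: B2 m + Phi c m + B2 m') ->
  (forall e i j, B1 (eps e i j) = B2 (eps e i j)) -> forall m, B1 m = B2 m.
Proof.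
move=> B1_tw B2_tw B12 m; apply/eqP; rewrite -subr_eq0; apply/eqP.
have diff_lin : lin (fun m => B1 m - B2 m).
  by move=> c u v; rewrite B1_tw B2_tw; lmod_ring.
have zero_lin : lin (fun _ : M => 0 : V) by move=> *; rewrite scaler0 addr0.
by apply: (lin_eps_eq diff_lin zero_lin) => e i j; rewrite B12 subrr.
Qed.

Lemma twisted_eps_ex (V : lmodType C) (Phi : cocycle M V) (g : E -> I -> I -> V) :
  (forall (k : K) e1 e2 i j,
     g (k *: e1 + e2) i j = k%:A *: g e1 i j + Phi k%:A (eps e1 i j) + g e2 i j) ->
  (forall a e i j,
     g (la a e) i j = \sum_(t < N) (x a i t *: g e t j + Phi (x a i t) (eps e t j))) ->
  (forall a e i j,
     g (ra e a) i j = \sum_(t < N) (x a t j *: g e i t + Phi (x a t j) (eps e i t))) ->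
  exists B : M -> V, (forall c m m', B (c *: m + m') = c *: B m + Phi c m + B m') /\
                     forall e i j, B (eps e i j) = g e i j.
Proof.
move=> g_lin g_la g_ra.
pose y e i j : twisted Phi := (eps e i j, g e i j).
have y_rel : rep_mod_rel la ra x y.
  split=> [k e1 e2 i j|a e i j|a e i j]; rewrite /y.
  - by rewrite twisted_addE twisted_scaleE /= (eps_lin i j) g_lin.
  - by rewrite twisted_sumE /= eps_la g_la.
  - by rewrite twisted_sumE /= eps_ra g_ra.
have [phi [phi_lin phi_y]] := lin_eps_ex y_rel.
have phi1_id m : (phi m).1 = m.
  apply: (@lin_eps_eq M (fun m => (phi m).1) id) => // [c u v|e i j].
  - by rewrite phi_lin.
  - by rewrite phi_y.
exists (fun m => (phi m).2); split; last by move=> e i j; rewrite phi_y.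
by move=> c m m'; rewrite phi_lin /= phi1_id.
Qed.

(** * The pairing and the derivation *)

Definition gpair e f i j u v : C := \sum_(p <- dp e f) x p.1 u j * x p.2 i v.

Lemma bilin_x_mul u j i v : bilin (fun a b : A => x a u j * x b i v : C).
Proof.
split=> [k a1 a2 b|k a b1 b2]; first by rewrite x_lin mulrDl scalerAl.
by rewrite x_lin mulrDr scalerAr.
Qed.

Lemma gpair_linl (k : K) e1 e2 f i j u v :
  gpair (k *: e1 + e2) f i j u v = k%:A * gpair e1 f i j u v + gpair e2 f i j u v.
Proof.
rewrite /gpair (teq2_sum (bilin_x_mul u j i v) (dcd_pair_lin_l HDCD k e1 e2 f)).
by rewrite big_cat /= (sum_tscale (bilin_x_mul u j i v)) mulr_algl.
Qed.

Lemma gpair_linr (k : K) e f1 f2 i j u v :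
  gpair e (k *: f1 + f2) i j u v = k%:A * gpair e f1 i j u v + gpair e f2 i j u v.
Proof.
rewrite /gpair (teq2_sum (bilin_x_mul u j i v) (dcd_pair_lin_r HDCD k e f1 f2)).
by rewrite big_cat /= (sum_tscale (bilin_x_mul u j i v)) mulr_algl.
Qed.

Lemma gpair_la_l e a f i j u v :
  gpair (la a e) f i j u v = \sum_(t < N) x a i t * gpair e f t j u v.
Proof.
rewrite /gpair (teq2_sum (bilin_x_mul u j i v) (dcd_pair_inn_l HDCD f a e)) big_map /=.
under eq_bigr do rewrite xM mulr_sumr.
rewrite exchange_big /=; apply: eq_bigr => t _; rewrite mulr_sumr.
by apply: eq_bigr => p _; rewrite mulrCA.
Qed.

Lemma gpair_ra_l e f b i j u v :
  gpair (ra e b) f i j u v = \sum_(t < N) x b t j * gpair e f i t u v.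
Proof.
rewrite /gpair (teq2_sum (bilin_x_mul u j i v) (dcd_pair_inn_r HDCD f e b)) big_map /=.
under eq_bigr do rewrite xM mulr_suml.
rewrite exchange_big /=; apply: eq_bigr => t _; rewrite mulr_sumr.
by apply: eq_bigr => p _; rewrite mulrCA mulrA.
Qed.

Lemma gpair_la_r e a f i j u v :
  gpair e (la a f) i j u v = \sum_(t < N) x a u t * gpair e f i j t v.
Proof.
rewrite /gpair (teq2_sum (bilin_x_mul u j i v) (dcd_pair_out_l HDCD e a f)) big_map /=.
under eq_bigr do rewrite xM mulr_suml.
rewrite exchange_big /=; apply: eq_bigr => t _; rewrite mulr_sumr.
by apply: eq_bigr => p _; rewrite mulrA.
Qed.

Lemma gpair_ra_r e f b i j u v :
  gpair e (ra f b) i j u v = \sum_(t < N) x b t v * gpair e f i j u t.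
Proof.
rewrite /gpair (teq2_sum (bilin_x_mul u j i v) (dcd_pair_out_r HDCD e f b)) big_map /=.
under eq_bigr do rewrite xM mulr_sumr.
rewrite exchange_big /=; apply: eq_bigr => t _; rewrite mulr_sumr.
by apply: eq_bigr => p _; rewrite mulrA mulrC.
Qed.

Lemma gpair_sym e f i j u v : gpair e f i j u v = gpair f e u v i j.
Proof.
rewrite /gpair (teq2_sum (bilin_x_mul u j i v) (dcd_pair_sym HDCD e f)) big_map /=.
by apply: eq_bigr => p _; rewrite mulrC.
Qed.

Lemma lin_scale_add (V : lmodType C) (c : C) (p1 p2 : M -> V) : lin p1 -> lin p2 ->
  lin (fun m => c *: p1 m + p2 m).
Proof. by move=> p1_lin p2_lin k u v; rewrite p1_lin p2_lin; lmod_ring. Qed.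

Lemma lin_sum_scale (V : lmodType C) (c : I -> C) (p : I -> M -> V) :
  (forall t, lin (p t)) -> lin (fun m => \sum_(t < N) c t *: p t m).
Proof.
move=> p_lin k u v; rewrite scaler_sumr -big_split; apply: eq_bigr => t _ /=.
by rewrite p_lin; lmod_ring.
Qed.

Lemma lpair_ex e i j :
  exists p : M -> C^o, lin p /\ forall f u v, p (eps f u v) = gpair e f i j u v.
Proof.
apply: lin_eps_ex; split=> [k f1 f2 u v|a f u v|a f u v].
- exact: gpair_linr.
- exact: gpair_la_r.
- exact: gpair_ra_r.
Qed.

Definition lpair e i j : M -> C^o := witness (lpair_ex e i j).

Lemma lpair_lin e i j : lin (lpair e i j). Proof. exact: (witnessP (lpair_ex e i j)).1. Qed.

Lemma lpair_eps e i j f u v : lpair e i j (eps f u v) = gpair e f i j u v.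
Proof. exact: (witnessP (lpair_ex e i j)).2. Qed.

Lemma rpair_ex (n : M) :
  exists p : M -> C^o, lin p /\ forall e i j, p (eps e i j) = lpair e i j n.
Proof.
apply: lin_eps_ex; split=> [k e1 e2 i j|a e i j|a e i j].
- apply: (lin_eps_eq (lpair_lin _ i j) (lin_scale_add _ (lpair_lin e1 i j) (lpair_lin e2 i j))).
  by move=> f u v; rewrite !lpair_eps gpair_linl.
- apply: (lin_eps_eq (lpair_lin _ i j) (lin_sum_scale _ (fun t => lpair_lin e t j))).
  by move=> f u v; rewrite lpair_eps gpair_la_l; apply: eq_bigr => t _; rewrite lpair_eps.
- apply: (lin_eps_eq (lpair_lin _ i j) (lin_sum_scale _ (fun t => lpair_lin e i t))).
  by move=> f u v; rewrite lpair_eps gpair_ra_l; apply: eq_bigr => t _; rewrite lpair_eps.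
Qed.

Definition pair (m n : M) : C := witness (rpair_ex n) m.

Lemma pair_linl c m1 m2 n : pair (c *: m1 + m2) n = c * pair m1 n + pair m2 n.
Proof. exact: (witnessP (rpair_ex n)).1. Qed.

Lemma pair_eps_l e i j n : pair (eps e i j) n = lpair e i j n.
Proof. exact: (witnessP (rpair_ex n)).2. Qed.

Lemma pair_eps e i j f u v : pair (eps e i j) (eps f u v) = gpair e f i j u v.
Proof. by rewrite pair_eps_l lpair_eps. Qed.

Lemma pair_linr c m n1 n2 : pair m (c *: n1 + n2) = c * pair m n1 + pair m n2.
Proof.
pose lhs m : C^o := pair m (c *: n1 + n2).
pose rhs m : C^o := c * pair m n1 + pair m n2.
apply: (@lin_eps_eq C^o lhs rhs) => [k u v|k u v|e i j]; rewrite /lhs /rhs.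
- by rewrite pair_linl.
- by rewrite !pair_linl /GRing.scale /=; ring.
- by rewrite !pair_eps_l lpair_lin.
Qed.

Lemma pair_sym m n : pair m n = pair n m.
Proof.
have pair_sym_eps e i j n' : pair (eps e i j) n' = pair n' (eps e i j).
  apply: (@lin_eps_eq C^o (pair (eps e i j)) (pair^~ (eps e i j))) => [k u v|k u v|f u v].
  - exact: pair_linr.
  - exact: pair_linl.
  - by rewrite !pair_eps gpair_sym.
apply: (@lin_eps_eq C^o (pair^~ n) (pair n)) m => // [k u v|k u v].
- exact: pair_linl.
- exact: pair_linr.
Qed.

Lemma pairDl m m' n : pair (m + m') n = pair m n + pair m' n.
Proof. by rewrite -{1}(scale1r m) pair_linl mul1r. Qed.
Lemma pairDr m n n' : pair m (n + n') = pair m n + pair m n'.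
Proof. by rewrite -{1}(scale1r n) pair_linr mul1r. Qed.
Lemma pair0r m : pair m 0 = 0.
Proof. by apply: idem_add_eq0; rewrite -pairDr addr0. Qed.
Lemma pair0l m : pair 0 m = 0.
Proof. by rewrite pair_sym pair0r. Qed.
Lemma pairZl c m n : pair (c *: m) n = c * pair m n.
Proof. by rewrite -(addr0 (c *: m)) pair_linl pair0l addr0. Qed.
Lemma pairZr c m n : pair m (c *: n) = c * pair m n.
Proof. by rewrite -(addr0 (c *: n)) pair_linr pair0r addr0. Qed.
Lemma pairNl m n : pair (- m) n = - pair m n.
Proof. by rewrite -scaleN1r pairZl mulN1r. Qed.
Lemma pairNr m n : pair m (- n) = - pair m n.
Proof. by rewrite -scaleN1r pairZr mulN1r. Qed.
Lemma pair_suml (J : Type) (s : seq J) (F : J -> M) n :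
  pair (\sum_(j <- s) F j) n = \sum_(j <- s) pair (F j) n.
Proof. by elim: s => [|a s IH]; rewrite ?big_nil ?pair0l // !big_cons pairDl IH. Qed.
Lemma pair_sumr (J : Type) (s : seq J) (F : J -> M) m :
  pair m (\sum_(j <- s) F j) = \sum_(j <- s) pair m (F j).
Proof. by elim: s => [|a s IH]; rewrite ?big_nil ?pair0r // !big_cons pairDr IH. Qed.

Definition dN : C -> M := witness derivation_x_ex.

Lemma dN_derivation : is_derivation dN. Proof. exact: (witnessP derivation_x_ex).1. Qed.
Lemma dN_x a i j : dN (x a i j) = eps (d a) i j. Proof. exact: (witnessP derivation_x_ex).2. Qed.

Lemma dN_lin : lin (dN : C -> MK). Proof. exact: dN_derivation.1. Qed.
Lemma dN_scaleD (k : K) c c' : dN (k *: c + c') = k%:A *: dN c + dN c'.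
Proof. exact: dN_lin. Qed.
Lemma dNM c c' : dN (c * c') = c *: dN c' + c' *: dN c. Proof. exact: dN_derivation.2. Qed.
Lemma dND c c' : dN (c + c') = dN c + dN c'. Proof. exact: (linD dN_lin c c'). Qed.
Lemma dN_sum (J : Type) (s : seq J) (F : J -> C) :
  dN (\sum_(j <- s) F j) = \sum_(j <- s) dN (F j).
Proof. exact: (lin_sum dN_lin s F). Qed.
Lemma dN1 : dN 1 = 0. Proof. exact: derivation1 dN_derivation. Qed.
Lemma dN_alg (k : K) : dN k%:A = 0. Proof. exact: (derivation_alg dN_derivation k). Qed.

Lemma pair_eps_dN_x e i j a u v : pair (eps e i j) (dN (x a u v)) = gpair e (d a) i j u v.
Proof. by rewrite dN_x pair_eps. Qed.

(** * The bracket *)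

Lemma teq2_sumM (U V : lmodType K) (b : U -> V -> MK) (s t : seq (U * V)) :
  bilin b -> teq2 s t -> \sum_(p <- s) (b p.1 p.2 : M) = \sum_(p <- t) (b p.1 p.2 : M).
Proof. by move=> b_bilin /(_ MK b b_bilin). Qed.

Lemma sum_tscaleM (U V : lmodType K) (b : U -> V -> MK) k (s : seq (U * V)) : bilin b ->
  \sum_(p <- tscale k s) (b p.1 p.2 : M) = k%:A *: \sum_(p <- s) (b p.1 p.2 : M).
Proof. by move=> b_bilin; rewrite (sum_tscale b_bilin). Qed.

Lemma bilin_lterm i v u j : bilin (fun (y : E) (a : A) => x a i v *: eps y u j : MK).
Proof.
split=> [k y1 y2 a|k y a1 a2]; rewrite ?(eps_lin u j) ?x_lin !(restrK_scaleE (V:=M)).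
all: lmod_ring_at M.
Qed.

Lemma bilin_rterm u j i v : bilin (fun (a : A) (y : E) => x a u j *: eps y i v : MK).
Proof.
split=> [k a1 a2 y|k a y1 y2]; rewrite ?(eps_lin i v) ?x_lin !(restrK_scaleE (V:=M)).
all: lmod_ring_at M.
Qed.

Definition gbr e f i j u v : M :=
  \sum_(p <- dbl e f) x p.2 i v *: eps p.1 u j + \sum_(p <- dbr e f) x p.1 u j *: eps p.2 i v.

Lemma gbr_linl (k : K) e1 e2 f i j u v :
  gbr (k *: e1 + e2) f i j u v = k%:A *: gbr e1 f i j u v + gbr e2 f i j u v.
Proof.
rewrite /gbr (teq2_sumM (bilin_lterm i v u j) (dcd_brl_lin_l HDCD k e1 e2 f)).
rewrite (teq2_sumM (bilin_rterm u j i v) (dcd_brr_lin_l HDCD k e1 e2 f)) !big_cat /=.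
rewrite (sum_tscaleM _ _ (bilin_lterm i v u j)) (sum_tscaleM _ _ (bilin_rterm u j i v)).
lmod_ring.
Qed.

Lemma gbr_linr (k : K) e f1 f2 i j u v :
  gbr e (k *: f1 + f2) i j u v = k%:A *: gbr e f1 i j u v + gbr e f2 i j u v.
Proof.
rewrite /gbr (teq2_sumM (bilin_lterm i v u j) (dcd_brl_lin_r HDCD k e f1 f2)).
rewrite (teq2_sumM (bilin_rterm u j i v) (dcd_brr_lin_r HDCD k e f1 f2)) !big_cat /=.
rewrite (sum_tscaleM _ _ (bilin_lterm i v u j)) (sum_tscaleM _ _ (bilin_rterm u j i v)).
lmod_ring.
Qed.

Lemma sum_scale_sum (T : Type) (s : seq T) (c : T -> C) (g : T -> I -> C) (m : T -> I -> M) :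
  \sum_(p <- s) c p *: \sum_(t < N) g p t *: m p t =
  \sum_(t < N) \sum_(p <- s) (c p * g p t) *: m p t.
Proof.
rewrite exchange_big /=; apply: eq_bigr => p _; rewrite scaler_sumr.
by apply: eq_bigr => t _; rewrite scalerA.
Qed.

Lemma gbr_la_r e a f i j u v : gbr e (la a f) i j u v =
  \sum_(t < N) (x a u t *: gbr e f i j t v + gpair e (d a) i j u t *: eps f t v).
Proof.
rewrite /gbr (teq2_sumM (bilin_lterm i v u j) (dcd_ax5_EA HDCD e f a)).
rewrite (teq2_sumM (bilin_rterm u j i v) (dcd_ax5_AE HDCD e f a)) big_cat !big_map /=.
have -> : \sum_(p <- dbl e f) x p.2 i v *: eps (la a p.1) u j =
    \sum_(t < N) \sum_(p <- dbl e f) x a u t *: (x p.2 i v *: eps p.1 t j).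
  under eq_bigr do rewrite eps_la.
  by rewrite sum_scale_sum; apply: eq_bigr => t _; apply: eq_bigr => p _; lmod_ring.
have -> : \sum_(p <- dbr e f) x (a * p.1) u j *: eps p.2 i v =
    \sum_(t < N) \sum_(p <- dbr e f) x a u t *: (x p.1 t j *: eps p.2 i v).
  under eq_bigr do rewrite xM scaler_suml.
  by rewrite exchange_big /=; apply: eq_bigr => t _; apply: eq_bigr => p _; lmod_ring.
have -> : \sum_(p <- dp e (d a)) x p.1 u j *: eps (la p.2 f) i v =
    \sum_(t < N) (\sum_(p <- dp e (d a)) x p.1 u j * x p.2 i t) *: eps f t v.
  under eq_bigr do rewrite eps_la.
  by rewrite sum_scale_sum; apply: eq_bigr => t _; rewrite scaler_suml.
rewrite -!big_split /=; apply: eq_bigr => t _.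
by rewrite /gpair scalerDr !scaler_sumr addrA.
Qed.

Lemma gbr_ra_r e f a i j u v : gbr e (ra f a) i j u v =
  \sum_(t < N) (x a t v *: gbr e f i j u t + gpair e (d a) i j t v *: eps f u t).
Proof.
rewrite /gbr (teq2_sumM (bilin_lterm i v u j) (dcd_ax4_EA HDCD e f a)).
rewrite (teq2_sumM (bilin_rterm u j i v) (dcd_ax4_AE HDCD e f a)) big_cat !big_map /=.
have -> : \sum_(p <- dbl e f) x (p.2 * a) i v *: eps p.1 u j =
    \sum_(t < N) \sum_(p <- dbl e f) x a t v *: (x p.2 i t *: eps p.1 u j).
  under eq_bigr do rewrite xM scaler_suml.
  by rewrite exchange_big /=; apply: eq_bigr => t _; apply: eq_bigr => p _; lmod_ring.
have -> : \sum_(p <- dp e (d a)) x p.2 i v *: eps (ra f p.1) u j =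
    \sum_(t < N) (\sum_(p <- dp e (d a)) x p.1 t j * x p.2 i v) *: eps f u t.
  under eq_bigr do rewrite eps_ra.
  rewrite sum_scale_sum; apply: eq_bigr => t _; rewrite scaler_suml.
  by apply: eq_bigr => p _; rewrite mulrC.
have -> : \sum_(p <- dbr e f) x p.1 u j *: eps (ra p.2 a) i v =
    \sum_(t < N) \sum_(p <- dbr e f) x a t v *: (x p.1 u j *: eps p.2 i t).
  under eq_bigr do rewrite eps_ra.
  by rewrite sum_scale_sum; apply: eq_bigr => t _; apply: eq_bigr => p _; lmod_ring.
rewrite -!big_split /=; apply: eq_bigr => t _.
by rewrite /gpair scalerDr !scaler_sumr addrAC.
Qed.

Lemma gbr_sym e f i j u v : dN (gpair e f i j u v) = gbr e f i j u v + gbr f e u v i j.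
Proof.
have sum_dl := teq2_sumM (bilin_lterm i v u j) (dcd_ax1_EA HDCD e f).
rewrite big_map big_cat /tswap big_map /= in sum_dl.
have sum_dr := teq2_sumM (bilin_rterm u j i v) (dcd_ax1_AE HDCD e f).
rewrite big_map big_cat /tswap big_map /= in sum_dr.
rewrite /gpair dN_sum; under eq_bigr do rewrite dNM !dN_x.
by rewrite big_split /= sum_dl sum_dr /gbr; lmod_ring.
Qed.

(* The left Leibniz rule is forced by the right one and the symmetry axiom. *)
Lemma gbr_la_l e a f i j u v : gbr (la a e) f i j u v =
  \sum_(t < N) (x a i t *: gbr e f t j u v - gpair f (d a) u v i t *: eps e t j
                + gpair e f t j u v *: eps (d a) i t).
Proof.
rewrite -[LHS](addrK (gbr f (la a e) u v i j)) -gbr_sym gpair_la_l dN_sum gbr_la_r -sumrB.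
by apply: eq_bigr => t _; rewrite dNM gbr_sym dN_x; lmod_ring.
Qed.

Lemma gbr_ra_l e a f i j u v : gbr (ra e a) f i j u v =
  \sum_(t < N) (x a t j *: gbr e f i t u v - gpair f (d a) u v t j *: eps e i t
                + gpair e f i t u v *: eps (d a) t j).
Proof.
rewrite -[LHS](addrK (gbr f (ra e a) u v i j)) -gbr_sym gpair_ra_l dN_sum gbr_ra_r -sumrB.
by apply: eq_bigr => t _; rewrite dNM gbr_sym dN_x; lmod_ring.
Qed.

Definition br_cocycle_r (e : E) (i j : I) : cocycle M M.
Proof.
refine (@Cocycle K C M M (fun c n => pair (eps e i j) (dN c) *: n) _ _ _).
- by move=> c c' m; rewrite dND pairDr scalerDl.
- by move=> c m m'; rewrite scalerDr.
- by move=> c c' m; rewrite dNM pairDr !pairZr; lmod_ring.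
Defined.

Lemma lbr_ex e i j : exists B : M -> M,
  (forall c m m', B (c *: m + m') = c *: B m + br_cocycle_r e i j c m + B m') /\
  forall f u v, B (eps f u v) = gbr e f i j u v.
Proof.
apply: twisted_eps_ex => [k f1 f2 u v|a f u v|a f u v] /=.
- by rewrite gbr_linr dN_alg pair0r scale0r addr0.
- by rewrite gbr_la_r; apply: eq_bigr => t _; rewrite pair_eps_dN_x.
- by rewrite gbr_ra_r; apply: eq_bigr => t _; rewrite pair_eps_dN_x.
Qed.

Definition lbr e i j : M -> M := witness (lbr_ex e i j).

Lemma lbr_twisted e i j c m m' :
  lbr e i j (c *: m + m') = c *: lbr e i j m + pair (eps e i j) (dN c) *: m + lbr e i j m'.
Proof. exact: (witnessP (lbr_ex e i j)).1. Qed.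

Lemma lbr_eps e i j f u v : lbr e i j (eps f u v) = gbr e f i j u v.
Proof. exact: (witnessP (lbr_ex e i j)).2. Qed.

(* The twist in the first argument is forced by [m, n] + [n, m] = d_N <m, n>. *)
Definition br_cocycle_l (n : M) : cocycle M M.
Proof.
refine (@Cocycle K C M M (fun c m => - pair n (dN c) *: m + pair m n *: dN c) _ _ _).
- by move=> c c' m; rewrite dND pairDr scalerDr; lmod_ring.
- by move=> c m m'; rewrite pairDl scalerDr; lmod_ring.
- by move=> c c' m; rewrite dNM pairDr !pairZr pairZl; lmod_ring.
Defined.

Lemma lbr_linl (k : K) e1 e2 i j n :
  lbr (k *: e1 + e2) i j n = k%:A *: lbr e1 i j n + lbr e2 i j n.
Proof.
move: n; apply: (twisted_eps_eq (lbr_twisted (k *: e1 + e2) i j)) => [c m m'|f u v].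
- by rewrite !lbr_twisted eps_scaleD pair_linl; lmod_ring.
- by rewrite !lbr_eps gbr_linl.
Qed.

Lemma lbr_la a e i j n : lbr (la a e) i j n =
  \sum_(t < N) (x a i t *: lbr e t j n + br_cocycle_l n (x a i t) (eps e t j)).
Proof.
move: n; apply: (twisted_eps_eq (lbr_twisted (la a e) i j)) => /= [c m m'|f u v].
- rewrite eps_la pair_suml scaler_suml scaler_sumr -!big_split; apply: eq_bigr => t _ /=.
  by rewrite lbr_twisted pair_linl pairDr pairZr pairZl; lmod_ring.
- rewrite lbr_eps gbr_la_l; apply: eq_bigr => t _.
  by rewrite lbr_eps dN_x !pair_eps; lmod_ring.
Qed.

Lemma lbr_ra e a i j n : lbr (ra e a) i j n =
  \sum_(t < N) (x a t j *: lbr e i t n + br_cocycle_l n (x a t j) (eps e i t)).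
Proof.
move: n; apply: (twisted_eps_eq (lbr_twisted (ra e a) i j)) => /= [c m m'|f u v].
- rewrite eps_ra pair_suml scaler_suml scaler_sumr -!big_split; apply: eq_bigr => t _ /=.
  by rewrite lbr_twisted pair_linl pairDr pairZr pairZl; lmod_ring.
- rewrite lbr_eps gbr_ra_l; apply: eq_bigr => t _.
  by rewrite lbr_eps dN_x !pair_eps; lmod_ring.
Qed.

Lemma br_ex (n : M) : exists B : M -> M,
  (forall c m m', B (c *: m + m') = c *: B m + br_cocycle_l n c m + B m') /\
  forall e i j, B (eps e i j) = lbr e i j n.
Proof.
apply: twisted_eps_ex => [k e1 e2 i j|a e i j|a e i j] /=.
- by rewrite lbr_linl dN_alg pair0r oppr0 !scale0r scaler0 !addr0.
- exact: lbr_la.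
- exact: lbr_ra.
Qed.

Definition br (m n : M) : M := witness (br_ex n) m.

Lemma br_twisted_l c m m' n :
  br (c *: m + m') n = c *: br m n - pair n (dN c) *: m + pair m n *: dN c + br m' n.
Proof. by rewrite /br (witnessP (br_ex n)).1 /=; lmod_ring. Qed.

Lemma br_eps_l e i j n : br (eps e i j) n = lbr e i j n.
Proof. exact: (witnessP (br_ex n)).2. Qed.

Lemma br_eps e i j f u v : br (eps e i j) (eps f u v) = gbr e f i j u v.
Proof. by rewrite br_eps_l lbr_eps. Qed.

Lemma br_twisted_r m c n n' :
  br m (c *: n + n') = c *: br m n + pair m (dN c) *: n + br m n'.
Proof.
move: m; apply: (@twisted_eps_eq M (br_cocycle_l (c *: n + n'))
  (br^~ (c *: n + n')) (fun m => c *: br m n + pair m (dN c) *: n + br m n'))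
  => /= [c' m m'|c' m m'|e i j].
- by rewrite br_twisted_l; lmod_ring.
- by rewrite !br_twisted_l !pair_linl pair_linr; lmod_ring.
- by rewrite !br_eps_l lbr_twisted.
Qed.

Lemma brDl m m' n : br (m + m') n = br m n + br m' n.
Proof.
by rewrite -{1}(scale1r m) br_twisted_l dN1 pair0r !scale0r scaler0 subr0 addr0 scale1r.
Qed.
Lemma brDr m n n' : br m (n + n') = br m n + br m n'.
Proof. by rewrite -{1}(scale1r n) br_twisted_r dN1 pair0r scale0r addr0 scale1r. Qed.
Lemma br0l n : br 0 n = 0.
Proof. by apply: idem_add_eq0; rewrite -brDl addr0. Qed.
Lemma br0r m : br m 0 = 0.
Proof. by apply: idem_add_eq0; rewrite -brDr addr0. Qed.
Lemma brZl c m n : br (c *: m) n = c *: br m n - pair n (dN c) *: m + pair m n *: dN c.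
Proof. by rewrite -(addr0 (c *: m)) br_twisted_l br0l addr0. Qed.
Lemma brZr c m n : br m (c *: n) = c *: br m n + pair m (dN c) *: n.
Proof. by rewrite -(addr0 (c *: n)) br_twisted_r br0r addr0. Qed.
Lemma brNl m n : br (- m) n = - br m n.
Proof. by apply/eqP; rewrite -addr_eq0 -brDl addNr br0l. Qed.
Lemma brNr m n : br m (- n) = - br m n.
Proof. by apply/eqP; rewrite -addr_eq0 -brDr addNr br0r. Qed.
Lemma br_suml (J : Type) (s : seq J) (F : J -> M) n :
  br (\sum_(j <- s) F j) n = \sum_(j <- s) br (F j) n.
Proof. by elim: s => [|a s IH]; rewrite ?big_nil ?br0l // !big_cons brDl IH. Qed.
Lemma br_sumr (J : Type) (s : seq J) (F : J -> M) m :
  br m (\sum_(j <- s) F j) = \sum_(j <- s) br m (F j).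
Proof. by elim: s => [|a s IH]; rewrite ?big_nil ?br0r // !big_cons brDr IH. Qed.

(** * The Courant-Dorfman identities *)

Lemma pair_eps_dN a i j c : pair (eps (d a) i j) (dN c) = 0.
Proof.
move: c; apply: (@derivation_x_eq0 C^o (fun c => pair (eps (d a) i j) (dN c))).
- split=> [k c c'|c c'] /=; first by rewrite dN_scaleD pair_linr.
  by rewrite dNM pairDr !pairZr.
- move=> b u v; rewrite pair_eps_dN_x /gpair.
  by rewrite (teq2_sum (bilin_x_mul _ _ _ _) (dcd_ax3 HDCD a b)) big_nil.
Qed.

Lemma pair_dN_dN c c' : pair (dN c) (dN c') = 0.
Proof.
move: c; apply: (@derivation_x_eq0 C^o (fun c => pair (dN c) (dN c'))).
- split=> [k c c''|c c''] /=; first by rewrite dN_scaleD pair_linl.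
  by rewrite dNM pairDl !pairZl.
- by move=> a i j; rewrite dN_x pair_eps_dN.
Qed.

Lemma gbr_d a f i j u v : gbr (d a) f i j u v = 0.
Proof.
rewrite /gbr (teq2_sumM (bilin_lterm i v u j) (dcd_ax2_l HDCD a f)).
by rewrite (teq2_sumM (bilin_rterm u j i v) (dcd_ax2_r HDCD a f)) !big_nil addr0.
Qed.

Lemma br_eps_d a i j n : br (eps (d a) i j) n = 0.
Proof.
rewrite br_eps_l; move: n; apply: (@lin_eps_eq M (lbr (d a) i j) (fun _ => 0)).
- by move=> c m m'; rewrite lbr_twisted pair_eps_dN scale0r addr0.
- by move=> *; rewrite scaler0 addr0.
- by move=> f u v; rewrite lbr_eps gbr_d.
Qed.

Lemma br_dN c n : br (dN c) n = 0.
Proof.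
move: c; apply: (@derivation_x_eq0 M (fun c => br (dN c) n)).
- split=> [k c c'|c c'] /=.
  + by rewrite dN_scaleD br_twisted_l dN_alg pair0r !scale0r scaler0 subr0 addr0.
  + by rewrite dNM br_twisted_l brZl (pair_sym (dN c') n) (pair_sym (dN c) n); lmod_ring.
- by move=> a i j; rewrite dN_x br_eps_d.
Qed.

Lemma dN_pair m n : dN (pair m n) = br m n + br n m.
Proof.
have dN_pair_eps e i j n' : dN (pair (eps e i j) n') = br (eps e i j) n' + br n' (eps e i j).
  move: n'; apply: (@twisted_eps_eq M (fun c n => pair (eps e i j) n *: dN c))
    => [c m1 m2|c m1 m2|f u v].
  - by rewrite pair_linr dND dNM.
  - by rewrite br_twisted_r br_twisted_l (pair_sym m1); lmod_ring.
  - by rewrite !br_eps pair_eps gbr_sym.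
move: m; apply: (@twisted_eps_eq M (fun c m => pair m n *: dN c)) => [c m1 m2|c m1 m2|e i j].
- by rewrite pair_linl dND dNM.
- by rewrite br_twisted_r br_twisted_l; lmod_ring.
- exact: dN_pair_eps.
Qed.

Lemma trilin_x_mul i1 j1 i2 j2 i3 j3 :
  trilin (fun a b c : A => x a i1 j1 * x b i2 j2 * x c i3 j3 : C).
Proof.
split; [|split] => k.
- by move=> a1 a2 b c; rewrite x_lin !mulrDl !scalerAl.
- by move=> a b1 b2 c; rewrite x_lin mulrDr mulrDl scalerAl scalerAr.
- by move=> a b c1 c2; rewrite x_lin mulrDr scalerAr.
Qed.

Lemma dcd_ax7_x e f g i1 j1 i2 j2 i3 j3 :
  \sum_(p <- dp f g) \sum_(q <- dp e (d p.1)) x q.1 i1 j1 * x q.2 i2 j2 * x p.2 i3 j3 =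
  \sum_(p <- dbr e g) \sum_(q <- dp f p.2) x p.1 i1 j1 * x q.1 i2 j2 * x q.2 i3 j3 +
  \sum_(p <- dbl e f) \sum_(q <- dp p.1 g) x q.1 i1 j1 * x p.2 i2 j2 * x q.2 i3 j3.
Proof.
have := teq3_sum (trilin_x_mul i1 j1 i2 j2 i3 j3) (dcd_ax7 HDCD e f g).
by rewrite !big_cat !sum_flatten_map /= => ->.
Qed.

Lemma pair_eps_dN_pair e i j f u v g s t :
  pair (eps e i j) (dN (pair (eps f u v) (eps g s t))) =
  \sum_(p <- dp g f) \sum_(q <- dp e (d p.1)) x q.1 u j * x q.2 i t * x p.2 s v +
  \sum_(p <- dp f g) \sum_(q <- dp e (d p.1)) x q.1 s j * x q.2 i v * x p.2 u t.
Proof.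
rewrite pair_eps /gpair dN_sum pair_sumr.
under eq_bigr do rewrite dNM !dN_x pairDr !pairZr !pair_eps.
rewrite big_split /=; congr (_ + _); last first.
  by apply: eq_bigr => p _; rewrite /gpair mulr_sumr; apply: eq_bigr => q _ /=; ring.
have bilin_flip : bilin (fun a b : A => x a s v * gpair e (d b) i j u t : C).
  split=> [k a1 a2 b|k a b1 b2]; first by rewrite x_lin mulrDl scalerAl.
  by rewrite d_lin gpair_linr -[k *: (_ * _)]mulr_algl; ring.
rewrite (teq2_sum bilin_flip (dcd_pair_sym HDCD f g)) big_map /=.
by apply: eq_bigr => p _; rewrite /gpair mulr_sumr; apply: eq_bigr => q _ /=; ring.
Qed.

Lemma pair_br_eps_eps e i j f u v g s t :
  pair (br (eps e i j) (eps f u v)) (eps g s t) =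
  \sum_(p <- dbl e f) \sum_(q <- dp p.1 g) x q.1 s j * x p.2 i v * x q.2 u t +
  \sum_(p <- dbr e f) \sum_(q <- dp g p.2) x p.1 u j * x q.1 i t * x q.2 s v.
Proof.
rewrite br_eps /gbr pairDl !pair_suml; congr (_ + _); apply: eq_bigr => p _.
- by rewrite pairZl pair_eps /gpair mulr_sumr; apply: eq_bigr => q _; ring.
- by rewrite pairZl pair_eps gpair_sym /gpair mulr_sumr; apply: eq_bigr => q _; ring.
Qed.

Lemma pair_eps_br_eps e i j f u v g s t :
  pair (eps f u v) (br (eps e i j) (eps g s t)) =
  \sum_(p <- dbl e g) \sum_(q <- dp p.1 f) x q.1 u j * x p.2 i t * x q.2 s v +
  \sum_(p <- dbr e g) \sum_(q <- dp f p.2) x p.1 s j * x q.1 i v * x q.2 u t.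
Proof.
rewrite br_eps /gbr pairDr !pair_sumr; congr (_ + _); apply: eq_bigr => p _.
- by rewrite pairZr pair_eps gpair_sym /gpair mulr_sumr; apply: eq_bigr => q _; ring.
- by rewrite pairZr pair_eps /gpair mulr_sumr; apply: eq_bigr => q _; ring.
Qed.

Lemma invariance_eps e i j f u v g s t :
  pair (eps e i j) (dN (pair (eps f u v) (eps g s t))) =
  pair (br (eps e i j) (eps f u v)) (eps g s t) + pair (eps f u v) (br (eps e i j) (eps g s t)).
Proof. by rewrite pair_eps_dN_pair !dcd_ax7_x pair_br_eps_eps pair_eps_br_eps; ring. Qed.

Lemma invariance_l n1 f u v g s t :
  pair n1 (dN (pair (eps f u v) (eps g s t))) =
  pair (br n1 (eps f u v)) (eps g s t) + pair (eps f u v) (br n1 (eps g s t)).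
Proof.
move: n1; apply: (@twisted_eps_eq C^o (fun _ _ => 0)
  (fun n => pair n (dN (pair (eps f u v) (eps g s t))))
  (fun n => pair (br n (eps f u v)) (eps g s t) + pair (eps f u v) (br n (eps g s t))))
  => /= [c m m'|c m m'|e i j].
- by rewrite pair_linl addr0.
- rewrite !br_twisted_l !pairDl !pairDr !pairNr !pairNl !pairZr !pairZl.
  by rewrite (pair_sym (dN c) (eps g s t)) (pair_sym (eps f u v) m) /GRing.scale /=; ring.
- exact: invariance_eps.
Qed.

Lemma invariance_lm n1 n2 g s t :
  pair n1 (dN (pair n2 (eps g s t))) =
  pair (br n1 n2) (eps g s t) + pair n2 (br n1 (eps g s t)).
Proof.
move: n2; apply: (@twisted_eps_eq C^o (fun c n => pair n (eps g s t) * pair n1 (dN c))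
  (fun n => pair n1 (dN (pair n (eps g s t))))
  (fun n => pair (br n1 n) (eps g s t) + pair n (br n1 (eps g s t))))
  => /= [c m m'|c m m'|f u v].
- by rewrite pair_linl dND dNM !pairDr !pairZr /GRing.scale /=; ring.
- by rewrite br_twisted_r !pairDl !pairZl /GRing.scale /=; ring.
- exact: invariance_l.
Qed.

Lemma invariance n1 n2 n3 :
  pair n1 (dN (pair n2 n3)) = pair (br n1 n2) n3 + pair n2 (br n1 n3).
Proof.
move: n3; apply: (@twisted_eps_eq C^o (fun c n => pair n2 n * pair n1 (dN c))
  (fun n => pair n1 (dN (pair n2 n)))
  (fun n => pair (br n1 n2) n + pair n2 (br n1 n)))
  => /= [c m m'|c m m'|g s t].
- by rewrite pair_linr dND dNM !pairDr !pairZr /GRing.scale /=; ring.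
- by rewrite br_twisted_r !pairDr !pairZr /GRing.scale /=; ring.
- exact: invariance_lm.
Qed.

(** * The Jacobi identity *)

Lemma teq3_sumM (U V X : lmodType K) (t : U -> V -> X -> MK) (s s' : seq (U * V * X)) :
  trilin t -> teq3 s s' ->
  \sum_(p <- s) (t p.1.1 p.1.2 p.2 : M) = \sum_(p <- s') (t p.1.1 p.1.2 p.2 : M).
Proof. by move=> t_trilin /(_ MK t t_trilin). Qed.

Section JacobiTerms.
Variables (e f g : E) (i j u v s t : I).

Definition ax6EAA_lhs : M := \sum_(p <- dbl f g) \sum_(q <- dbl e p.1)
  (x q.2 i v * x p.2 u t) *: eps q.1 s j.
Definition ax6EAA_rhs1 : M := \sum_(p <- dbl e g) \sum_(q <- dp f (d p.2))
  (x q.1 i v * x q.2 u t) *: eps p.1 s j.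
Definition ax6EAA_rhs2 : M := \sum_(p <- dbl e f) \sum_(q <- dbl p.1 g)
  (x p.2 i v * x q.2 u t) *: eps q.1 s j.
Definition ax6AEA_lhs : M := \sum_(p <- dbl f g) \sum_(q <- dbr e p.1)
  (x q.1 s j * x p.2 u t) *: eps q.2 i v.
Definition ax6AEA_rhs1 : M := \sum_(p <- dbr e g) \sum_(q <- dbl f p.2)
  (x p.1 s j * x q.2 u t) *: eps q.1 i v.
Definition ax6AEA_rhs2 : M := \sum_(p <- dbl e f) \sum_(q <- dp p.1 g)
  (x q.1 s j * x q.2 u t) *: eps (d p.2) i v.
Definition ax6AEA_rhs3 : M := \sum_(p <- dbr e f) \sum_(q <- dp (d p.1) g)
  (x (- q.1) s j * x q.2 u t) *: eps p.2 i v.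
Definition ax6AAE_lhs : M := \sum_(p <- dbr f g) \sum_(q <- dp e (d p.1))
  (x q.1 s j * x q.2 i v) *: eps p.2 u t.
Definition ax6AAE_rhs1 : M := \sum_(p <- dbr e g) \sum_(q <- dbr f p.2)
  (x p.1 s j * x q.1 i v) *: eps q.2 u t.
Definition ax6AAE_rhs2 : M := \sum_(p <- dbl e f) \sum_(q <- dbr p.1 g)
  (x q.1 s j * x p.2 i v) *: eps q.2 u t.

Lemma ax6EAA_eps : ax6EAA_lhs = ax6EAA_rhs1 + ax6EAA_rhs2.
Proof.
have trilin_E : trilin (fun (y : E) (b c : A) => (x b i v * x c u t) *: eps y s j : MK).
  by split; [|split] => k *;
    rewrite ?(eps_lin s j) ?x_lin !(restrK_scaleE (V:=M)); lmod_ring_at M.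
have := teq3_sumM trilin_E (dcd_ax6_EAA HDCD e f g).
by rewrite !big_cat !sum_flatten_map /=.
Qed.

Lemma ax6AEA_eps : ax6AEA_lhs = ax6AEA_rhs1 + ax6AEA_rhs2 + ax6AEA_rhs3.
Proof.
have trilin_A : trilin (fun (a : A) (y : E) (c : A) => (x a s j * x c u t) *: eps y i v : MK).
  by split; [|split] => k *;
    rewrite ?(eps_lin i v) ?x_lin !(restrK_scaleE (V:=M)); lmod_ring_at M.
have := teq3_sumM trilin_A (dcd_ax6_AEA HDCD e f g).
by rewrite !big_cat !sum_flatten_map /= addrA.
Qed.

Lemma ax6AAE_eps : ax6AAE_lhs = ax6AAE_rhs1 + ax6AAE_rhs2.
Proof.
have trilin_R : trilin (fun (a b : A) (y : E) => (x a s j * x b i v) *: eps y u t : MK).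
  by split; [|split] => k *;
    rewrite ?(eps_lin u t) ?x_lin !(restrK_scaleE (V:=M)); lmod_ring_at M.
have := teq3_sumM trilin_R (dcd_ax6_AAE HDCD e f g).
by rewrite !big_cat !sum_flatten_map /=.
Qed.

Definition jac_outer : M :=
  \sum_(p <- dbl e f) (x p.2 i v *: gbr p.1 g u j s t - gpair g (d p.2) s t i v *: eps p.1 u j
                        + gpair p.1 g u j s t *: eps (d p.2) i v) +
  \sum_(p <- dbr e f) (x p.1 u j *: gbr p.2 g i v s t - gpair g (d p.1) s t u j *: eps p.2 i v
                        + gpair p.2 g i v s t *: eps (d p.1) u j).

Definition jac_rest : M :=
  - \sum_(p <- dbl e f) gpair g (d p.2) s t i v *: eps p.1 u j +
  \sum_(p <- dbr e f) (x p.1 u j *: gbr p.2 g i v s t + gpair p.2 g i v s t *: eps (d p.1) u j).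

End JacobiTerms.

Lemma br_eps_br_eps e f g i j u v s t :
  br (eps e i j) (br (eps f u v) (eps g s t)) =
  ax6EAA_lhs e f g i j u v s t + ax6AEA_lhs e f g i j u v s t + ax6AAE_lhs e f g i j u v s t +
  ax6EAA_rhs1 f e g u v i j s t + ax6AEA_rhs1 f e g u v i j s t +
  ax6AAE_rhs1 f e g u v i j s t.
Proof.
rewrite br_eps {1}/gbr brDr !br_sumr.
under eq_bigr do rewrite brZr br_eps pair_eps_dN_x.
under [X in _ + X]eq_bigr do rewrite brZr br_eps pair_eps_dN_x.
rewrite !big_split /=.
have -> : \sum_(p <- dbl f g) x p.2 u t *: gbr e p.1 i j s v =
    ax6EAA_lhs e f g i j u v s t + ax6AEA_lhs e f g i j u v s t.
  rewrite -big_split; apply: eq_bigr => p _ /=.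
  by rewrite /gbr scalerDr !scaler_sumr; congr (_ + _); apply: eq_bigr => q _; lmod_ring.
have -> : \sum_(p <- dbr f g) x p.1 s v *: gbr e p.2 i j u t =
    ax6AEA_rhs1 f e g u v i j s t + ax6AAE_rhs1 f e g u v i j s t.
  rewrite -big_split; apply: eq_bigr => p _ /=.
  by rewrite /gbr scalerDr !scaler_sumr; congr (_ + _); apply: eq_bigr => q _; lmod_ring.
have -> : \sum_(p <- dbl f g) gpair e (d p.2) i j u t *: eps p.1 s v =
    ax6EAA_rhs1 f e g u v i j s t.
  by apply: eq_bigr => p _; rewrite /gpair scaler_suml.
have -> : \sum_(p <- dbr f g) gpair e (d p.1) i j s v *: eps p.2 u t =
    ax6AAE_lhs e f g i j u v s t.
  by apply: eq_bigr => p _; rewrite /gpair scaler_suml.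
lmod_ring.
Qed.

Lemma br_br_eps_eps e f g i j u v s t :
  br (br (eps e i j) (eps f u v)) (eps g s t) = jac_outer e f g i j u v s t.
Proof.
rewrite br_eps /gbr /jac_outer brDl !br_suml; congr (_ + _); apply: eq_bigr => p _.
all: by rewrite brZl br_eps pair_eps_dN_x dN_x pair_eps.
Qed.

Lemma jac_outer_split e f g i j u v s t :
  jac_outer e f g i j u v s t =
  ax6EAA_rhs2 e f g i j u v s t + ax6AAE_rhs2 e f g i j u v s t +
  ax6AEA_rhs2 e f g i j u v s t + ax6AEA_rhs3 e f g i j u v s t + jac_rest e f g i j u v s t.
Proof.
rewrite /jac_outer /jac_rest !big_split /= !sumrN.
have -> : \sum_(p <- dbl e f) x p.2 i v *: gbr p.1 g u j s t =
    ax6EAA_rhs2 e f g i j u v s t + ax6AAE_rhs2 e f g i j u v s t.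
  rewrite -big_split; apply: eq_bigr => p _ /=.
  by rewrite /gbr scalerDr !scaler_sumr; congr (_ + _); apply: eq_bigr => q _; lmod_ring.
have -> : \sum_(p <- dbl e f) gpair p.1 g u j s t *: eps (d p.2) i v =
    ax6AEA_rhs2 e f g i j u v s t.
  by apply: eq_bigr => p _; rewrite /gpair scaler_suml.
have <- : - \sum_(p <- dbr e f) gpair g (d p.1) s t u j *: eps p.2 i v =
    ax6AEA_rhs3 e f g i j u v s t.
  rewrite -sumrN; apply: eq_bigr => p _; rewrite gpair_sym /gpair scaler_suml -sumrN.
  by apply: eq_bigr => q _; rewrite xN; lmod_ring.
lmod_ring.
Qed.

(* Via d<<e, f>> = [[e, f]] + [[f, e]]^sigma, the leftover terms regroup into
   terms of [[d a, g]], which vanish, and pairs cancelling by symmetry of <<-, ->>. *)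
Lemma jac_rest_cancel e f g i j u v s t :
  jac_rest e f g i j u v s t + jac_outer f e g u v i j s t - jac_rest f e g u v i j s t = 0.
Proof.
pose Q (y : E) (a : A) : MK := x a u j *: gbr y g i v s t + gpair y g i v s t *: eps (d a) u j.
pose S (y : E) (a : A) : MK := gpair g (d a) s t i v *: eps y u j.
have Q_bilin : bilin Q.
  by split=> k *; rewrite /Q ?gbr_linl ?gpair_linl ?x_lin ?d_lin ?(eps_lin u j)
    !(restrK_scaleE (V:=M)); lmod_ring_at M.
have S_bilin : bilin S.
  by split=> k *; rewrite /S ?d_lin ?gpair_linr ?(eps_lin u j)
    !(restrK_scaleE (V:=M)); lmod_ring_at M.
have dS_bilin : bilin (fun a b : A => S (d a) b).
  by split=> k *; rewrite /S d_lin ?gpair_linr ?(eps_lin u j)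
    !(restrK_scaleE (V:=M)); lmod_ring_at M.
have sumQ := teq2_sumM Q_bilin (dcd_ax1_EA HDCD f e).
rewrite big_map big_cat /tswap big_map /= in sumQ.
have sumS := teq2_sumM S_bilin (dcd_ax1_EA HDCD e f).
rewrite big_map big_cat /tswap big_map /= in sumS.
have sumdS := teq2_sumM dS_bilin (dcd_pair_sym HDCD e f).
rewrite /tswap big_map /= in sumdS.
have Qd_Sd : \sum_(p <- dp f e) (Q (d p.1) p.2 : M) = \sum_(p <- dp f e) (S (d p.2) p.1 : M).
  by apply: eq_bigr => p _; rewrite /Q /S gbr_d gpair_sym scaler0 add0r.
suff -> : jac_rest e f g i j u v s t + jac_outer f e g u v i j s t - jac_rest f e g u v i j s t =
    (\sum_(p <- dbl f e) (Q p.1 p.2 : M) + \sum_(p <- dbr e f) (Q p.2 p.1 : M)) -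
    (\sum_(p <- dbl e f) (S p.1 p.2 : M) + \sum_(p <- dbr f e) (S p.2 p.1 : M)).
  by rewrite -sumQ -sumS Qd_Sd -sumdS subrr.
rewrite /jac_rest /jac_outer /Q /S !big_split /= !sumrN; lmod_ring.
Qed.

Lemma jacobi_eps e f g i j u v s t :
  br (eps e i j) (br (eps f u v) (eps g s t)) =
  br (br (eps e i j) (eps f u v)) (eps g s t) + br (eps f u v) (br (eps e i j) (eps g s t)).
Proof.
have rest_eq : jac_rest e f g i j u v s t =
    jac_rest f e g u v i j s t - jac_outer f e g u v i j s t.
  apply/eqP; rewrite -subr_eq0 -(jac_rest_cancel e f g i j u v s t).
  by apply/eqP; lmod_ring.
rewrite !br_eps_br_eps br_br_eps_eps jac_outer_split rest_eq jac_outer_split.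
by rewrite !ax6EAA_eps !ax6AEA_eps !ax6AAE_eps; lmod_ring.
Qed.

Lemma dN_pair_dN n c : dN (pair n (dN c)) = br n (dN c).
Proof. by rewrite dN_pair br_dN addr0. Qed.

Lemma pair_br_dN n1 n2 c :
  pair n1 (br n2 (dN c)) = pair (br n1 n2) (dN c) + pair n2 (br n1 (dN c)).
Proof. by rewrite -dN_pair_dN invariance. Qed.

Definition jacobiator n1 n2 n3 := br n1 (br n2 n3) - br (br n1 n2) n3 - br n2 (br n1 n3).

Lemma jacobiator_lin3 n1 n2 c n3 n3' :
  jacobiator n1 n2 (c *: n3 + n3') = c *: jacobiator n1 n2 n3 + jacobiator n1 n2 n3'.
Proof.
rewrite /jacobiator !br_twisted_r !brDr !brZr !dN_pair_dN (pair_br_dN n1 n2 c).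
lmod_ring.
Qed.

Lemma jacobiator_lin2 n1 c n2 n2' n3 :
  jacobiator n1 (c *: n2 + n2') n3 = c *: jacobiator n1 n2 n3 + jacobiator n1 n2' n3.
Proof.
rewrite /jacobiator !br_twisted_l br_twisted_r !brDr !brDl !brNr !brZr !brZl !dN_pair_dN.
by rewrite (invariance n1 n2 n3) (pair_br_dN n1 n3 c); lmod_ring.
Qed.

Lemma jacobiator_lin1 c n1 n1' n2 n3 :
  jacobiator (c *: n1 + n1') n2 n3 = c *: jacobiator n1 n2 n3 + jacobiator n1' n2 n3.
Proof.
rewrite /jacobiator !br_twisted_l !brDr !brDl !brNr !brNl !brZr !brZl br_dN !dN_pair_dN.
rewrite (invariance n2 n1 n3) (dN_pair n1 n2) !pairDr (pair_sym n3 (br n1 n2)).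
by rewrite (pair_sym n3 (br n2 n1)) (pair_sym (dN c) n3) (pair_br_dN n2 n3 c); lmod_ring.
Qed.

Lemma jacobi n1 n2 n3 : br n1 (br n2 n3) = br (br n1 n2) n3 + br n2 (br n1 n3).
Proof.
suff : jacobiator n1 n2 n3 = 0 by move/eqP; rewrite !subr_eq add0r addrC => /eqP.
have zero_lin : lin (fun _ : M => 0 : M) by move=> *; rewrite scaler0 addr0.
move: n3; apply: (lin_eps_eq (jacobiator_lin3 n1 n2) zero_lin) => g s t.
move: n2; apply: (lin_eps_eq (p1 := jacobiator n1 ^~ (eps g s t))
  (fun c m m' => jacobiator_lin2 n1 c m m' (eps g s t)) zero_lin) => f u v.
move: n1; apply: (lin_eps_eq (p1 := fun n => jacobiator n (eps f u v) (eps g s t))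
  (fun c m m' => jacobiator_lin1 c m m' (eps f u v) (eps g s t)) zero_lin) => e i j.
by rewrite /jacobiator jacobi_eps; lmod_ring.
Qed.

Lemma rep_is_CD_algebra : is_CD_algebra pair dN br.
Proof.
split.
- exact: pair_linl.
- exact: pair_sym.
- exact: dN_scaleD.
- exact: dNM.
- by move=> k m1 m2 n; rewrite br_twisted_l dN_alg pair0r !scale0r scaler0 subr0 addr0.
- by move=> k m n1 n2; rewrite br_twisted_r dN_alg pair0r scale0r addr0.
- by move=> n1 n2 c; rewrite brZr.
- exact: invariance.
- exact: dN_pair.
- exact: jacobi.
- exact: br_dN.
- exact: pair_dN_dN.
Qed.

End RepresentationSpaces.

Theorem theorem7p4 (K : fieldType) (charK0 : [pchar K] =i pred0)
    (A : algType K) (E : lmodType K)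
    (la : A -> E -> E) (ra : E -> A -> E) (d : A -> E)
    (dp : E -> E -> seq (A * A)) (dbl : E -> E -> seq (E * A))
    (dbr : E -> E -> seq (A * E))
    (HDCD : is_double_CD_algebra la ra d dp dbl dbr)
    (N : nat) (HN : (0 < N)%N)
    (C : comAlgType K) (x : A -> 'I_N -> 'I_N -> C) (HC : is_rep_algebra x)
    (M : lmodType C) (eps : E -> 'I_N -> 'I_N -> M) (HM : is_rep_module la ra x eps) :
  exists (dN : C -> M) (pair : M -> M -> C) (br : M -> M -> M),
    [/\ (forall a i j, dN (x a i j) = eps (d a) i j),
        (forall e f i j u v,
           pair (eps e i j) (eps f u v) = \sum_(p <- dp e f) x p.1 u j * x p.2 i v),
        (forall e f i j u v,
           br (eps e i j) (eps f u v) =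
             \sum_(p <- dbl e f) x p.2 i v *: eps p.1 u j +
             \sum_(p <- dbr e f) x p.1 u j *: eps p.2 i v) &
        is_CD_algebra pair dN br].
Proof.
exists (dN HDCD HC HM), (pair HDCD HC HM), (br HDCD HC HM); split.
- exact: dN_x.
- by move=> e f i j u v; rewrite pair_eps.
- by move=> e f i j u v; rewrite br_eps.
- exact: rep_is_CD_algebra.
Qed.
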